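(* Let $H:\Sigma\to\mathbb R$ be continuous with summable variation. \begin{enumerate} \item For every $x\in\mathrm{Mather}(H)$, the function $h(x,\cdot)$ belongs to $\mathbb K$ and is a calibrated sub-action. \item If $V\in C^0(\Sigma)$ is a calibrated sub-action, then $V\in\mathbb K$ and $V(y)=\min\{V(x)+h(x,y): x\in\mathrm{Mather}(H)\}$ for all $y\in\Sigma$. \end{enumerate}
   Context: $\Sigma:=\{0,1\}^{\mathbb N}$, $\sigma$ the left shift; $x\stackrel{n}{=}y$ means $x_j=y_j$ for $0\le j\le n-1$; $\mathrm{var}(f,n):=\sup\{|f(x)-f(y)|:x\stackrel{n}{=}y\}$; summable variation: $\sum_n\mathrm{var}(H,n)<\infty$. $\mathbb K:=\{V\in C^0(\Sigma):\forall n\ge1,\ \mathrm{var}(V,n)\le\sum_{k\ge n+1}\mathrm{var}(H,k)\}$. A minimizing measure is a $\sigma$-invariant probability minimizing $\int H\,d\nu$ over $\sigma$-invariant probabilities; $\bar H$ is the minimal value; $\mathrm{Mather}(H)$ is the union of supports of minimizing measures. Lax–Oleinik operator $T[V](y):=\min\{V(x)+H(x):\sigma(x)=y\}$; calibrated sub-action: continuous $V$ with $T[V]=V+\bar H$. Peierls barrier: $h(x,y):=\lim_{p\to\infty}\lim_{n\to\infty}S_n^p(x,y)$, $S_n^p(x,y):=\inf\{\sum_{i=0}^{k-1}[H(\sigma^iz)-\bar H]:k\ge n,\ z\stackrel{p}{=}x,\ \sigma^k(z)\stackrel{p}{=}y\}$. *)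

From Stdlib Require Import Reals Lra Lia List.
Import ListNotations.
Open Scope R_scope.

Definition Sigma := nat -> bool.

Definition shift (x : Sigma) : Sigma := fun j => x (S j).
Definition shiftn (k : nat) (x : Sigma) : Sigma := fun j => x (k + j)%nat.

Definition agree (n : nat) (x y : Sigma) : Prop :=
  forall j, (j < n)%nat -> x j = y j.

(** continuity for the product topology (cylinders = balls) *)
Definition continuous_S (f : Sigma -> R) : Prop :=
  forall x eps, 0 < eps -> exists n, forall y, agree n x y -> Rabs (f x - f y) < eps.

Definition var_is (f : Sigma -> R) (n : nat) (v : R) : Prop :=
  is_lub (fun r => exists x y, agree n x y /\ r = Rabs (f x - f y)) v.

Definition summable_variation (H : Sigma -> R) : Prop :=
  exists (v : nat -> R) (l : R),
    (forall n, var_is H n (v n)) /\ Un_cv (fun N => sum_f_R0 v N) l.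

(** The set K: V continuous and for n >= 1,
    var(V,n) <= sum_{k >= n+1} var(H,k) = l - sum_{k=0}^{n} var(H,k). *)
Definition in_K (H : Sigma -> R) (V : Sigma -> R) : Prop :=
  continuous_S V /\
  forall (v : nat -> R) (l : R),
    (forall n, var_is H n (v n)) -> Un_cv (fun N => sum_f_R0 v N) l ->
    forall n, (1 <= n)%nat ->
      forall x y, agree n x y -> Rabs (V x - V y) <= l - sum_f_R0 v n.

(** Borel probability measures on Sigma, represented (Kolmogorov/Caratheodory)
    by their values on cylinders [w], w a finite word. *)
Definition prob_measure (mu : list bool -> R) : Prop :=
  (forall w, 0 <= mu w) /\ mu [] = 1 /\
  (forall w, mu w = mu (w ++ [false]) + mu (w ++ [true])).

(** sigma-invariance: mu(sigma^{-1}[w]) = mu([0w]) + mu([1w]) = mu([w]) *)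
Definition invariant (mu : list bool -> R) : Prop :=
  forall w, mu w = mu (false :: w) + mu (true :: w).

Definition inv_prob (mu : list bool -> R) : Prop := prob_measure mu /\ invariant mu.

Fixpoint words (n : nat) : list (list bool) :=
  match n with
  | O => [ [] ]
  | S m => flat_map (fun w => [w ++ [false]; w ++ [true]]) (words m)
  end.

Definition ext (w : list bool) : Sigma := fun j => nth j w false.

Definition riemann_sum (mu : list bool -> R) (f : Sigma -> R) (n : nat) : R :=
  fold_right Rplus 0 (map (fun w => mu w * f (ext w)) (words n)).

(** I = int f dmu (for continuous f) *)
Definition integral_is (mu : list bool -> R) (f : Sigma -> R) (I : R) : Prop :=
  Un_cv (riemann_sum mu f) I.

Definition is_inf (E : R -> Prop) (m : R) : Prop :=
  (forall r, E r -> m <= r) /\ (forall b, (forall r, E r -> b <= r) -> b <= m).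

Definition Hbar_is (H : Sigma -> R) (Hbar : R) : Prop :=
  is_inf (fun I => exists mu, inv_prob mu /\ integral_is mu H I) Hbar.

Definition minimizing (H : Sigma -> R) (Hbar : R) (mu : list bool -> R) : Prop :=
  inv_prob mu /\ integral_is mu H Hbar.

Definition prefix (n : nat) (x : Sigma) : list bool := map x (seq 0 n).

Definition in_support (mu : list bool -> R) (x : Sigma) : Prop :=
  forall n, 0 < mu (prefix n x).

Definition Mather (H : Sigma -> R) (Hbar : R) (x : Sigma) : Prop :=
  exists mu, minimizing H Hbar mu /\ in_support mu x.

(** calibrated sub-action: T[V] = V + Hbar, T[V](y) = min{V x + H x : sigma x = y} *)
Definition calibrated (H : Sigma -> R) (Hbar : R) (V : Sigma -> R) : Prop :=
  continuous_S V /\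
  forall y,
    (forall x, shift x = y -> V y + Hbar <= V x + H x) /\
    (exists x, shift x = y /\ V x + H x = V y + Hbar).

Fixpoint birkhoff (H : Sigma -> R) (Hbar : R) (z : Sigma) (k : nat) : R :=
  match k with
  | O => 0
  | S m => birkhoff H Hbar z m + (H (shiftn m z) - Hbar)
  end.

Definition S_is (H : Sigma -> R) (Hbar : R) (n p : nat) (x y : Sigma) (s : R) : Prop :=
  is_inf (fun r => exists k z, (n <= k)%nat /\ agree p z x /\ agree p (shiftn k z) y
                               /\ r = birkhoff H Hbar z k) s.

Definition peierls_is (H : Sigma -> R) (Hbar : R) (x y : Sigma) (r : R) : Prop :=
  exists (s : nat -> nat -> R) (L : nat -> R),
    (forall n p, S_is H Hbar n p x y (s n p)) /\
    (forall p, Un_cv (fun n => s n p) (L p)) /\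
    Un_cv L r.

From Stdlib Require Import Reals Lra Lia List ClassicalEpsilon Classical FunctionalExtensionality Cantor Arith.
Import ListNotations.
Open Scope R_scope.

(* Write B for the Birkhoff sums of H - Hbar and T(m) = sum_{k > m} var(H,k).
   Bowen's bound |B z k - B z' k| <= T m whenever z, z' agree on k + m symbols,
   together with periodic invariant measures, gives B >= -T 0. Hence
   u(y) := inf {B z k : sigma^k z = y} is a sub-action with variations bounded
   by T, and H - Hbar + u - u o sigma >= 0 has zero integral for every
   minimizing measure; so along orbits in the Mather set B x k = u(sigma^k x) - u(x)
   stays bounded. For such x the double limit defining h(x, .) is monotone and
   bounded, h(x, .) inherits the bound T on its variations, and passing the
   one-step recursion of S_n^p to the limit shows that h(x, .) is calibrated.
   Conversely, a calibrated V satisfies V(sigma^k z) <= V z + B z k, which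
   gives both the variation bound (V in K) and V y <= V x + h(x,y). Following
   calibrated preimages backwards from y gives an orbit with
   B = V y - V(y_k); a cluster point of its empirical measures is an invariant
   probability with integral Hbar, and the backward orbit returns to every
   cylinder around a point x of its support, which yields V y >= V x + h(x,y). *)

Fixpoint sumN (n : nat) (F : nat -> R) : R :=
  match n with O => 0 | S m => sumN m F + F m end.

Lemma sumN_ext n F G : (forall i, (i < n)%nat -> F i = G i) -> sumN n F = sumN n G.
Proof. induction n; simpl; intros; auto. rewrite IHn by (intros; apply H; lia). rewrite H by lia. auto. Qed.

Lemma sumN_plus n F G : sumN n (fun i => F i + G i) = sumN n F + sumN n G.
Proof. induction n; simpl; [lra| rewrite IHn; lra]. Qed.

Lemma sumN_minus n F G : sumN n (fun i => F i - G i) = sumN n F - sumN n G.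
Proof. induction n; simpl; [lra| rewrite IHn; lra]. Qed.

Lemma sumN_scal n c F : sumN n (fun i => c * F i) = c * sumN n F.
Proof. induction n; simpl; [lra| rewrite IHn; lra]. Qed.

Lemma sumN_le n F G : (forall i, (i < n)%nat -> F i <= G i) -> sumN n F <= sumN n G.
Proof. induction n; simpl; intros; [lra|]. assert (F n <= G n) by (apply H; lia).
  assert (sumN n F <= sumN n G) by (apply IHn; intros; apply H; lia). lra. Qed.

Lemma sumN_const n c : sumN n (fun _ => c) = INR n * c.
Proof. induction n; simpl sumN; [simpl; lra| rewrite IHn, S_INR; lra]. Qed.

Lemma sumN_shift n a : sumN n (fun i => a (S i)) = sumN n a - a 0%nat + a n.
Proof. induction n; simpl; [lra| rewrite IHn; lra]. Qed.

Lemma sumN_front n a : sumN (S n) a = a 0%nat + sumN n (fun i => a (S i)).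
Proof. rewrite sumN_shift. simpl. lra. Qed.

Lemma sumN_le_support k n (a : nat -> R) :
  (forall i, 0 <= a i <= 1) -> (forall i, (n <= i)%nat -> a i = 0) -> sumN k a <= INR n.
Proof. intros H01 H0. assert (sumN k a <= INR (Nat.min k n)).
  { induction k. simpl; lra. simpl sumN. destruct (le_lt_dec n k).
    - rewrite (H0 k l). assert (INR (Nat.min k n) <= INR (Nat.min (S k) n)) by (apply le_INR; lia). lra.
    - replace (Nat.min (S k) n) with (S (Nat.min k n)) by lia. rewrite S_INR. specialize (H01 k). lra. }
  assert (INR (Nat.min k n) <= INR n) by (apply le_INR; lia). lra. Qed.

Lemma shiftn_shiftn a b z : shiftn a (shiftn b z) = shiftn (b + a) z.
Proof. apply functional_extensionality; intro j; unfold shiftn; f_equal; lia. Qed.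

Lemma shift_shiftn k z : shift (shiftn k z) = shiftn (S k) z.
Proof. apply functional_extensionality; intro j; unfold shift, shiftn; f_equal; lia. Qed.

Lemma shiftn_S k z : shiftn (S k) z = shiftn k (shift z).
Proof. apply functional_extensionality; intro j; unfold shift, shiftn; f_equal. Qed.

Lemma shiftn_1 z : shiftn 1 z = shift z.
Proof. reflexivity. Qed.

Definition bcons (b : bool) (y : Sigma) : Sigma :=
  fun j => match j with O => b | S j' => y j' end.

Lemma shift_bcons b y : shift (bcons b y) = y.
Proof. reflexivity. Qed.

Lemma bcons_shift x : x = bcons (x 0%nat) (shift x).
Proof. apply functional_extensionality; intros [|j]; reflexivity. Qed.

Lemma agree_mono n m x y : (m <= n)%nat -> agree n x y -> agree m x y.
Proof. unfold agree; intros; apply H0; lia. Qed.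
Lemma agree_sym n x y : agree n x y -> agree n y x.
Proof. unfold agree; intros; symmetry; auto. Qed.
Lemma agree_trans n x y z : agree n x y -> agree n y z -> agree n x z.
Proof. unfold agree; intros; rewrite H; auto. Qed.
Lemma agree_refl n x : agree n x x.
Proof. unfold agree; auto. Qed.
Lemma agree_0 x y : agree 0 x y.
Proof. unfold agree; intros; lia. Qed.
Lemma agree_shift m x y : agree (S m) x y -> agree m (shift x) (shift y).
Proof. unfold agree, shift; intros; apply H; lia. Qed.
Lemma agree_bcons m b x y : agree m x y -> agree (S m) (bcons b x) (bcons b y).
Proof. unfold agree; intros Ha [|j] Hj; simpl; auto; apply Ha; lia. Qed.

Lemma length_prefix n z : length (prefix n z) = n.
Proof. unfold prefix; rewrite length_map, length_seq; auto. Qed.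

Lemma nth_prefix n z j : (j < n)%nat -> nth j (prefix n z) false = z j.
Proof. intros; unfold prefix. rewrite nth_indep with (d' := z 0%nat) by (rewrite length_map, length_seq; lia).
  rewrite map_nth, seq_nth by lia. auto. Qed.

Lemma prefix_S n z : prefix (S n) z = prefix n z ++ [z n].
Proof. unfold prefix; rewrite seq_S, map_app; reflexivity. Qed.

Lemma prefix_S_front n z : prefix (S n) z = z 0%nat :: prefix n (shift z).
Proof. unfold prefix. simpl. f_equal. rewrite <- seq_shift, map_map. reflexivity. Qed.

Lemma agree_prefix n x y : agree n x y <-> prefix n x = prefix n y.
Proof. split.
  - intro Ha. unfold prefix. apply map_ext_in. intros j Hj. apply in_seq in Hj. apply Ha; lia.
  - intros He j Hj. rewrite <- (nth_prefix n x j Hj), <- (nth_prefix n y j Hj), He; auto. Qed.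

Lemma prefix_ext w : prefix (length w) (ext w) = w.
Proof. apply nth_ext with (d := false) (d' := false). rewrite length_prefix; auto.
  intros j Hj. rewrite length_prefix in Hj. rewrite nth_prefix by auto. reflexivity. Qed.

Lemma agree_ext_app u w : agree (length u) (ext (u ++ w)) (ext u).
Proof. intros j Hj. unfold ext. rewrite app_nth1 by auto. auto. Qed.

Lemma agree_ext_prefix n z : agree n (ext (prefix n z)) z.
Proof. intros j Hj. unfold ext. apply nth_prefix; auto. Qed.

Lemma shift_ext b w : shift (ext (b :: w)) = ext w.
Proof. reflexivity. Qed.

Definition cat (w : list bool) (y : Sigma) : Sigma :=
  fun j => if Nat.ltb j (length w) then nth j w false else y (j - length w)%nat.

Lemma shiftn_cat w y : shiftn (length w) (cat w y) = y.
Proof. apply functional_extensionality; intro j; unfold shiftn, cat.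
  destruct (Nat.ltb_spec (length w + j) (length w)); [lia|]. f_equal; lia. Qed.

Lemma shiftn_cat_prefix k z y : shiftn k (cat (prefix k z) y) = y.
Proof. rewrite <- (length_prefix k z) at 1. apply shiftn_cat. Qed.

Lemma agree_cat_prefix k z y : agree k (cat (prefix k z) y) z.
Proof. intros j Hj. unfold cat. rewrite length_prefix. destruct (Nat.ltb_spec j k); [|lia].
  apply nth_prefix; auto. Qed.

Lemma agree_cat_prefix_shiftn k n z y :
  agree n y (shiftn k z) -> agree (k + n) (cat (prefix k z) y) z.
Proof. intros Ha j Hj. unfold cat. rewrite length_prefix. destruct (Nat.ltb_spec j k).
  - apply nth_prefix; auto.
  - rewrite Ha by lia. unfold shiftn. f_equal; lia. Qed.

Lemma birkhoff_add H Hbar z a b :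
  birkhoff H Hbar z (a + b) = birkhoff H Hbar z a + birkhoff H Hbar (shiftn a z) b.
Proof. induction b. rewrite Nat.add_0_r; simpl; lra.
  rewrite Nat.add_succ_r. simpl. rewrite IHb, shiftn_shiftn. lra. Qed.

Lemma birkhoff_front H Hbar z k :
  birkhoff H Hbar z (S k) = (H z - Hbar) + birkhoff H Hbar (shift z) k.
Proof. change (S k) with (1 + k)%nat. rewrite birkhoff_add, shiftn_1. f_equal. cbn [birkhoff].
  change (shiftn 0 z) with z. ring. Qed.

Lemma birkhoff_sumN H Hbar z k : birkhoff H Hbar z k = sumN k (fun i => H (shiftn i z) - Hbar).
Proof. induction k; simpl; auto. rewrite IHk; auto. Qed.

Lemma Rabs_le_inv a b : Rabs a <= b -> - b <= a <= b.
Proof. unfold Rabs; destruct (Rcase_abs a); intros; lra. Qed.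

Lemma Rabs_lt_inv a b : Rabs a < b -> - b < a < b.
Proof. unfold Rabs; destruct (Rcase_abs a); intros; lra. Qed.

Lemma eq_of_Rabs_lt_all a b : (forall eps, 0 < eps -> Rabs (a - b) < eps) -> a = b.
Proof. intros He. apply Rle_antisym; apply Rle_plus_epsilon; intros eps Hp;
  specialize (He eps Hp); apply Rabs_lt_inv in He; lra. Qed.

Lemma inv_INR_small eps : 0 < eps -> exists N, (1 <= N)%nat /\ forall k, (N <= k)%nat -> / INR k < eps.
Proof. intros He. destruct (INR_unbounded (/ eps)) as [N HN]. exists (S N). split; [lia|]. intros k Hk.
  assert (INR N < INR k) by (apply lt_INR; lia). assert (0 < / eps) by (apply Rinv_0_lt_compat; auto).
  rewrite <- (Rinv_inv eps). apply Rinv_lt_contravar; [apply Rmult_lt_0_compat|]; lra. Qed.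

Lemma Un_cv_const c : Un_cv (fun _ => c) c.
Proof. intros e He; exists O; intros; unfold R_dist; rewrite Rminus_diag, Rabs_R0; auto. Qed.

Lemma Un_cv_S (u : nat -> R) a : Un_cv u a -> Un_cv (fun n => u (S n)) a.
Proof. intros Hu e He. destruct (Hu e He) as [N HN]. exists N. intros; apply HN; lia. Qed.

Lemma Un_cv_of_S (u : nat -> R) a : Un_cv (fun n => u (S n)) a -> Un_cv u a.
Proof. intros Hu e He. destruct (Hu e He) as [N HN]. exists (S N). intros n Hn.
  destruct n; [lia|]. apply HN; lia. Qed.

Lemma Un_cv_add_l (u : nat -> R) a m : Un_cv u a -> Un_cv (fun j => u (m + j)%nat) a.
Proof. intros Hu e He. destruct (Hu e He) as [N HN]. exists N. intros; apply HN; lia. Qed.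

Lemma Un_cv_ext (u w : nat -> R) a : (forall n, u n = w n) -> Un_cv u a -> Un_cv w a.
Proof. intros He Hu e Hep. destruct (Hu e Hep) as [N HN]. exists N; intros; rewrite <- He; auto. Qed.

Lemma CV_min (u w : nat -> R) a b :
  Un_cv u a -> Un_cv w b -> Un_cv (fun n => Rmin (u n) (w n)) (Rmin a b).
Proof. intros Hu Hw e He. destruct (Hu e He) as [N1 H1]. destruct (Hw e He) as [N2 H2].
  exists (N1 + N2)%nat. intros n Hn. unfold R_dist.
  specialize (H1 n ltac:(lia)). specialize (H2 n ltac:(lia)). unfold R_dist in *.
  apply Rabs_def2 in H1; apply Rabs_def2 in H2. unfold Rmin.
  destruct (Rle_dec (u n) (w n)), (Rle_dec a b); apply Rabs_def1; lra. Qed.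

Lemma Rle_cv_lim_ev (u w : nat -> R) a b N : (forall n, (N <= n)%nat -> u n <= w n) ->
  Un_cv u a -> Un_cv w b -> a <= b.
Proof. intros Hle Hu Hw. apply Rle_plus_epsilon. intros eps He.
  destruct (Hu (eps/2)) as [N1 HN1]; [lra|]. destruct (Hw (eps/2)) as [N2 HN2]; [lra|].
  set (n := (N + N1 + N2)%nat). specialize (HN1 n ltac:(unfold n; lia)).
  specialize (HN2 n ltac:(unfold n; lia)). specialize (Hle n ltac:(unfold n; lia)).
  unfold R_dist in *. apply Rabs_def2 in HN1. apply Rabs_def2 in HN2. lra. Qed.

Lemma cv_le_const_ev (u : nat -> R) a c N : (forall n, (N <= n)%nat -> u n <= c) -> Un_cv u a -> a <= c.
Proof. intros. apply (Rle_cv_lim_ev u (fun _ => c) a c N); auto. apply Un_cv_const. Qed.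

Lemma cv_ge_const_ev (u : nat -> R) a c N : (forall n, (N <= n)%nat -> c <= u n) -> Un_cv u a -> c <= a.
Proof. intros. apply (Rle_cv_lim_ev (fun _ => c) u c a N); auto. apply Un_cv_const. Qed.

Lemma inf_exists (E : R -> Prop) (b : R) :
  (exists r, E r) -> (forall r, E r -> b <= r) -> {m | is_inf E m}.
Proof. intros Hne Hb.
  destruct (completeness (fun r => E (- r))) as [m [Hm1 Hm2]].
  - exists (- b). intros r Hr. specialize (Hb _ Hr). lra.
  - destruct Hne as [r Hr]. exists (- r). rewrite Ropp_involutive; auto.
  - exists (- m). split.
    + intros r Hr. assert (- r <= m) by (apply Hm1; rewrite Ropp_involutive; auto). lra.
    + intros b' Hb'. assert (m <= - b'). { apply Hm2. intros r Hr. specialize (Hb' _ Hr). lra. } lra.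
Qed.

Lemma is_inf_le E m r : is_inf E m -> E r -> m <= r.
Proof. intros [A _]; auto. Qed.

Lemma is_inf_ge E m b : is_inf E m -> (forall r, E r -> b <= r) -> b <= m.
Proof. intros [_ A]; auto. Qed.

Lemma is_inf_mono (E F : R -> Prop) a b : (forall r, F r -> E r) -> is_inf E a -> is_inf F b -> a <= b.
Proof. intros Hs HE HF. apply (is_inf_ge F b a HF). intros; apply (is_inf_le E); auto. Qed.

Lemma is_lub_unique E a b : is_lub E a -> is_lub E b -> a = b.
Proof. intros [A1 A2] [B1 B2]. apply Rle_antisym; [apply A2|apply B2]; auto. Qed.

(** * Sums over cylinders and integrals *)

Definition sumL (L : list R) : R := fold_right Rplus 0 L.
Definition sum_words (n : nat) (F : list bool -> R) : R := sumL (map F (words n)).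

Lemma sumL_app l1 l2 : sumL (l1 ++ l2) = sumL l1 + sumL l2.
Proof. induction l1; simpl; [lra|]. unfold sumL in *; simpl; rewrite IHl1; lra. Qed.

Lemma sumL_map_flat {A B : Type} (F : B -> R) (g : A -> list B) (L : list A) :
  sumL (map F (flat_map g L)) = sumL (map (fun a => sumL (map F (g a))) L).
Proof. induction L; simpl; auto. rewrite map_app, sumL_app, IHL. reflexivity. Qed.

Lemma sum_words_snoc n F : sum_words (S n) F = sum_words n (fun w => F (w ++ [false]) + F (w ++ [true])).
Proof. unfold sum_words. simpl words. rewrite sumL_map_flat. f_equal. apply map_ext. intro w.
  unfold sumL; simpl. lra. Qed.

Lemma sum_words_ext_in n F G : (forall w, In w (words n) -> F w = G w) -> sum_words n F = sum_words n G.
Proof. intros; unfold sum_words; f_equal; apply map_ext_in; auto. Qed.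

Lemma sum_words_ext n F G : (forall w, F w = G w) -> sum_words n F = sum_words n G.
Proof. intros; apply sum_words_ext_in; auto. Qed.

Lemma sumL_map_plus {A} (F G : A -> R) L :
  sumL (map (fun w => F w + G w) L) = sumL (map F L) + sumL (map G L).
Proof. induction L; unfold sumL in *; simpl; [lra| rewrite IHL; lra]. Qed.
Lemma sumL_map_scal {A} c (F : A -> R) L : sumL (map (fun w => c * F w) L) = c * sumL (map F L).
Proof. induction L; unfold sumL in *; simpl; [lra| rewrite IHL; lra]. Qed.
Lemma sumL_map_le {A} (F G : A -> R) L :
  (forall w, In w L -> F w <= G w) -> sumL (map F L) <= sumL (map G L).
Proof. induction L; unfold sumL in *; simpl; intros; [lra|].
  assert (F a <= G a) by (apply H; left; auto).
  assert (fold_right Rplus 0 (map F L) <= fold_right Rplus 0 (map G L))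
    by (apply IHL; intros; apply H; right; auto).
  lra. Qed.
Lemma sumL_map_nonneg {A} (F : A -> R) L : (forall w, In w L -> 0 <= F w) -> 0 <= sumL (map F L).
Proof. induction L as [|b L IH]; unfold sumL in *; simpl; intros Hp; [lra|].
  assert (0 <= F b) by (apply Hp; left; auto).
  assert (0 <= fold_right Rplus 0 (map F L)) by (apply IH; intros; apply Hp; right; auto). lra. Qed.
Lemma sumL_map_term {A} (F : A -> R) L a :
  (forall w, In w L -> 0 <= F w) -> In a L -> F a <= sumL (map F L).
Proof. induction L as [|b L IH]; intros Hp Hin; [contradiction|].
  assert (0 <= sumL (map F L)) by (apply sumL_map_nonneg; intros; apply Hp; right; auto).
  assert (0 <= F b) by (apply Hp; left; auto).
  unfold sumL in *; simpl. destruct Hin as [<-|Hin]. lra.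
  assert (F a <= fold_right Rplus 0 (map F L)) by (apply IH; auto; intros; apply Hp; right; auto). lra. Qed.

Lemma sum_words_plus n F G : sum_words n (fun w => F w + G w) = sum_words n F + sum_words n G.
Proof. apply sumL_map_plus. Qed.
Lemma sum_words_scal n c F : sum_words n (fun w => c * F w) = c * sum_words n F.
Proof. apply sumL_map_scal. Qed.
Lemma sum_words_minus n F G : sum_words n (fun w => F w - G w) = sum_words n F - sum_words n G.
Proof. replace (sum_words n F - sum_words n G) with (sum_words n F + (-1) * sum_words n G) by ring.
  rewrite <- sum_words_scal, <- sum_words_plus.
  apply sum_words_ext; intros; ring. Qed.

Lemma words_length n w : In w (words n) -> length w = n.
Proof. revert w; induction n; simpl; intros w Hw.
  - destruct Hw as [<-|[]]; auto.
  - apply in_flat_map in Hw. destruct Hw as [w' [Hw' Hin]]. simpl in Hin.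
    rewrite <- (IHn w' Hw'). destruct Hin as [<-|[<-|[]]]; rewrite length_app; simpl; lia. Qed.

Lemma prefix_in_words n z : In (prefix n z) (words n).
Proof. induction n; simpl; auto. rewrite prefix_S. apply in_flat_map. exists (prefix n z). split; auto.
  destruct (z n); simpl; auto. Qed.

Lemma in_words w : In w (words (length w)).
Proof. rewrite <- (prefix_ext w) at 1. apply prefix_in_words. Qed.

Lemma sum_words_le_len n F G : (forall w, length w = n -> F w <= G w) -> sum_words n F <= sum_words n G.
Proof. intros; apply sumL_map_le. intros; apply H, words_length; auto. Qed.

Lemma sum_words_le n F G : (forall w, F w <= G w) -> sum_words n F <= sum_words n G.
Proof. intros; apply sum_words_le_len; auto. Qed.

Lemma sum_words_term n F z : (forall w, 0 <= F w) -> F (prefix n z) <= sum_words n F.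
Proof. intros; apply sumL_map_term; auto. apply prefix_in_words. Qed.

Lemma sum_words_nonneg n F : (forall w, 0 <= F w) -> 0 <= sum_words n F.
Proof. intros. assert (sum_words n (fun _ => 0) <= sum_words n F) by (apply sum_words_le; auto).
  assert (sum_words n (fun _ => 0) = 0 * sum_words n (fun _ => 0))
    by (rewrite <- sum_words_scal; apply sum_words_ext; intros; ring).
  lra. Qed.

Lemma sum_words_abs n F G :
  (forall w, length w = n -> Rabs (F w) <= G w) -> Rabs (sum_words n F) <= sum_words n G.
Proof. intros Hb. apply Rabs_le. split.
  - assert (sum_words n (fun w => - G w) <= sum_words n F).
    { apply sum_words_le_len; intros. specialize (Hb w H). apply Rabs_le_inv in Hb. lra. }
    assert (sum_words n (fun w => - G w) = - sum_words n G).
    { rewrite <- (Rmult_1_l (sum_words n G)), Ropp_mult_distr_l, <- sum_words_scal.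
      apply sum_words_ext; intros; ring. }
    lra.
  - apply sum_words_le_len; intros. specialize (Hb w H). apply Rabs_le_inv in Hb. lra. Qed.

Lemma sum_words_const n c : sum_words n (fun _ => c) = c * 2 ^ n.
Proof. revert c; induction n; intros. unfold sum_words; simpl; unfold sumL; simpl; ring.
  rewrite sum_words_snoc, IHn. simpl. ring. Qed.

Lemma sum_words_cons n F : sum_words (S n) F = sum_words n (fun w => F (false :: w) + F (true :: w)).
Proof. revert F; induction n; intro F.
  - unfold sum_words; simpl; unfold sumL; simpl; ring.
  - rewrite sum_words_snoc, IHn, sum_words_snoc. apply sum_words_ext. intro w. simpl. ring. Qed.

Lemma sum_words_app m j F : sum_words (m + j) F = sum_words m (fun u => sum_words j (fun w => F (u ++ w))).
Proof. revert F; induction j; intro F.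
  - rewrite Nat.add_0_r. apply sum_words_ext. intro u. unfold sum_words; simpl; unfold sumL; simpl.
    rewrite app_nil_r; ring.
  - rewrite Nat.add_succ_r, sum_words_snoc, IHj. apply sum_words_ext. intro u. rewrite sum_words_snoc.
    apply sum_words_ext. intro w.
    rewrite !app_assoc. auto. Qed.

Lemma sum_words_sumN n N (A : nat -> list bool -> R) :
  sum_words n (fun w => sumN N (fun i => A i w)) = sumN N (fun i => sum_words n (A i)).
Proof. induction N; simpl. rewrite (sum_words_ext _ _ (fun _ => 0 * 0)) by (intros; ring).
  rewrite sum_words_scal; ring.
  rewrite sum_words_plus, IHN; auto. Qed.

Lemma measure_sum_extensions mu (Hmu : prob_measure mu) j u : sum_words j (fun w => mu (u ++ w)) = mu u.
Proof. revert u; induction j; intro u.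
  - unfold sum_words; simpl; unfold sumL; simpl. rewrite app_nil_r; ring.
  - rewrite sum_words_snoc. rewrite (sum_words_ext _ _ (fun w => mu (u ++ w))). apply IHj.
    intro w. destruct Hmu as [_ [_ Ha]]. rewrite (Ha (u ++ w)). rewrite !app_assoc; auto. Qed.

Lemma measure_sum_words mu (Hmu : prob_measure mu) n : sum_words n mu = 1.
Proof. transitivity (sum_words n (fun w => mu ([] ++ w))). apply sum_words_ext; auto.
  rewrite (measure_sum_extensions mu Hmu n []). destruct Hmu as [_ [H1 _]]; auto. Qed.

Lemma riemann_sum_words mu F n : riemann_sum mu F n = sum_words n (fun w => mu w * F (ext w)).
Proof. reflexivity. Qed.

Definition modulus (F : Sigma -> R) (om : nat -> R) : Prop :=
  forall n x y, agree n x y -> Rabs (F x - F y) <= om n.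

Lemma riemann_cauchy mu (Hmu : prob_measure mu) F (om : nat -> R)
  (Hom : modulus F om) n j :
  Rabs (riemann_sum mu F (n + j) - riemann_sum mu F n) <= om n.
Proof. rewrite !riemann_sum_words, sum_words_app.
  rewrite (sum_words_ext n (fun w => mu w * F (ext w))
                          (fun u => sum_words j (fun w => mu (u ++ w) * F (ext u)))).
  2:{ intro u. rewrite (sum_words_ext j _ (fun w => F (ext u) * mu (u ++ w))) by (intros; ring).
      rewrite sum_words_scal, measure_sum_extensions; auto; ring. }
  rewrite <- sum_words_minus.
  rewrite (sum_words_ext n _
             (fun u => sum_words j (fun w => mu (u ++ w) * (F (ext (u ++ w)) - F (ext u))))).
  2:{ intro u. rewrite <- sum_words_minus. apply sum_words_ext; intros; ring. }
  apply Rle_trans with (sum_words n (fun u => om n * mu u)).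
  - apply sum_words_abs. intros u Hu.
    apply Rle_trans with (sum_words j (fun w => om n * mu (u ++ w))).
    + apply sum_words_abs. intros w _. rewrite Rabs_mult. destruct Hmu as [Hp _].
      rewrite (Rabs_right (mu (u ++ w))) by (apply Rle_ge, Hp). rewrite Rmult_comm.
      apply Rmult_le_compat_r; auto. apply Hom. rewrite <- Hu. apply agree_ext_app.
    + rewrite sum_words_scal, measure_sum_extensions; auto; lra.
  - rewrite sum_words_scal, measure_sum_words; auto; lra.
Qed.

Lemma integral_exists mu (Hmu : prob_measure mu) F (om : nat -> R)
  (Hom : modulus F om) (Hom0 : Un_cv om 0) :
  { I | integral_is mu F I /\ forall n, Rabs (I - riemann_sum mu F n) <= om n }.
Proof.
  assert (Hc : Cauchy_crit (riemann_sum mu F)).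
  { intros e He. destruct (Hom0 (e/2)) as [N HN]; [lra|]. exists N. intros a b Ha Hb.
    specialize (HN N (le_n N)). unfold R_dist in *. rewrite Rminus_0_r in HN.
    apply Rabs_lt_inv in HN.
    pose proof (riemann_cauchy mu Hmu F om Hom N (a - N)) as Ea.
    pose proof (riemann_cauchy mu Hmu F om Hom N (b - N)) as Eb.
    replace (N + (a - N))%nat with a in Ea by lia. replace (N + (b - N))%nat with b in Eb by lia.
    apply Rabs_le_inv in Ea. apply Rabs_le_inv in Eb. apply Rabs_def1; lra. }
  destruct (R_complete _ Hc) as [I HI]. exists I. split; auto.
  intro n. apply Rabs_le. split.
  - apply (cv_ge_const_ev (fun j => riemann_sum mu F (n + j) - riemann_sum mu F n) _ _ 0).
    + intros j _. pose proof (riemann_cauchy mu Hmu F om Hom n j) as E. apply Rabs_le_inv in E. lra.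
    + apply CV_minus; [apply Un_cv_add_l, HI | apply Un_cv_const].
  - apply (cv_le_const_ev (fun j => riemann_sum mu F (n + j) - riemann_sum mu F n) _ _ 0).
    + intros j _. pose proof (riemann_cauchy mu Hmu F om Hom n j) as E. apply Rabs_le_inv in E. lra.
    + apply CV_minus; [apply Un_cv_add_l, HI | apply Un_cv_const].
Qed.

Lemma riemann_shift mu (Hmu : inv_prob mu) F n :
  riemann_sum mu (fun z => F (shift z)) (S n) = riemann_sum mu F n.
Proof. rewrite !riemann_sum_words, sum_words_cons. apply sum_words_ext. intro w. rewrite !shift_ext.
  destruct Hmu as [_ Hinv]. rewrite (Hinv w). ring. Qed.

Lemma riemann_const mu (Hmu : prob_measure mu) c n : riemann_sum mu (fun _ => c) n = c.
Proof. rewrite riemann_sum_words. rewrite (sum_words_ext _ _ (fun w => c * mu w)) by (intros; ring).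
  rewrite sum_words_scal, measure_sum_words; auto; ring. Qed.

Lemma riemann_plus mu F G n :
  riemann_sum mu (fun z => F z + G z) n = riemann_sum mu F n + riemann_sum mu G n.
Proof. rewrite !riemann_sum_words, <- sum_words_plus. apply sum_words_ext; intros; ring. Qed.
Lemma riemann_minus mu F G n :
  riemann_sum mu (fun z => F z - G z) n = riemann_sum mu F n - riemann_sum mu G n.
Proof. rewrite !riemann_sum_words, <- sum_words_minus. apply sum_words_ext; intros; ring. Qed.

Lemma zero_on_support mu (Hmu : prob_measure mu) g (om : nat -> R)
  (Hom : modulus g om) (Hom0 : Un_cv om 0)
  (Hg : forall z, 0 <= g z) (Hint : Un_cv (riemann_sum mu g) 0) x :
  in_support mu x -> g x = 0.
Proof. intros Hs. destruct (Rle_dec (g x) 0) as [Hle|Hgt]. specialize (Hg x); lra. exfalso.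
  apply Rnot_le_lt in Hgt. destruct (Hom0 (g x / 2)) as [m Hm]; [lra|].
  specialize (Hm m (le_n m)). unfold R_dist in Hm. rewrite Rminus_0_r in Hm. apply Rabs_lt_inv in Hm.
  set (c := mu (prefix m x) * (g x / 2)). assert (Hc : 0 < c) by (unfold c; specialize (Hs m); nra).
  assert (Hb : forall j, c <= riemann_sum mu g (m + j)).
  { intro j. rewrite riemann_sum_words, sum_words_app.
    apply Rle_trans with (sum_words j (fun w => mu (prefix m x ++ w) * g (ext (prefix m x ++ w)))).
    - apply Rle_trans with (sum_words j (fun w => (g x / 2) * mu (prefix m x ++ w))).
      + rewrite sum_words_scal, measure_sum_extensions; auto. unfold c; lra.
      + apply sum_words_le. intro w. destruct Hmu as [Hp _]. specialize (Hp (prefix m x ++ w)).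
        assert (g x / 2 <= g (ext (prefix m x ++ w))).
        { assert (agree m (ext (prefix m x ++ w)) x).
          { apply agree_trans with (ext (prefix m x)). rewrite <- (length_prefix m x) at 1.
            apply agree_ext_app.
            apply agree_ext_prefix. }
          specialize (Hom m _ _ H). apply Rabs_le_inv in Hom. lra. }
        nra.
    - apply (sum_words_term m (fun u => sum_words j (fun w => mu (u ++ w) * g (ext (u ++ w))))).
      intro u. apply sum_words_nonneg. intro w. destruct Hmu as [Hp _]. specialize (Hp (u ++ w)).
      specialize (Hg (ext (u ++ w))). nra. }
  assert (c <= 0). { apply (cv_ge_const_ev (fun j => riemann_sum mu g (m + j)) 0 c 0).
    intros; apply Hb. apply Un_cv_add_l, Hint. }
  lra.
Qed.

Lemma riemann_sum_close mu nu F n d M :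
  (forall w, length w = n -> Rabs (mu w - nu w) <= d) -> (forall z, Rabs (F z) <= M) ->
  Rabs (riemann_sum mu F n - riemann_sum nu F n) <= d * M * 2 ^ n.
Proof. intros Hd HM. rewrite !riemann_sum_words, <- sum_words_minus, <- sum_words_const.
  apply sum_words_abs. intros w Hw. rewrite <- Rmult_minus_distr_r, Rabs_mult.
  apply Rmult_le_compat; try apply Rabs_pos; auto. Qed.

(** * Empirical measures *)

Definition cyl_ind (z : Sigma) (w : list bool) : R :=
  if list_eq_dec Bool.bool_dec (prefix (length w) z) w then 1 else 0.

Lemma cyl_ind_01 z w : 0 <= cyl_ind z w <= 1.
Proof. unfold cyl_ind; destruct list_eq_dec; lra. Qed.

Lemma cyl_ind_nil z : cyl_ind z [] = 1.
Proof. unfold cyl_ind; destruct list_eq_dec as [_|n]; auto. exfalso; apply n; reflexivity. Qed.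

Lemma cyl_ind_snoc z w b : cyl_ind z (w ++ [b]) = if Bool.eqb (z (length w)) b then cyl_ind z w else 0.
Proof. unfold cyl_ind. rewrite length_app. simpl length. rewrite Nat.add_1_r, prefix_S.
  destruct (list_eq_dec Bool.bool_dec (prefix (length w) z ++ [z (length w)]) (w ++ [b])) as [e|n];
  destruct (list_eq_dec Bool.bool_dec (prefix (length w) z) w) as [e'|n'].
  - apply app_inj_tail in e. destruct e as [_ ->]. rewrite Bool.eqb_reflx; auto.
  - apply app_inj_tail in e. tauto.
  - destruct (Bool.eqb (z (length w)) b) eqn:E; auto. apply Bool.eqb_prop in E. subst.
    exfalso; apply n; rewrite e'; auto.
  - destruct (Bool.eqb _ _); auto. Qed.

Lemma cyl_ind_snoc_sum z w : cyl_ind z (w ++ [false]) + cyl_ind z (w ++ [true]) = cyl_ind z w.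
Proof. rewrite !cyl_ind_snoc. destruct (z (length w)); simpl; ring. Qed.

Lemma cyl_ind_cons z b w : cyl_ind z (b :: w) = if Bool.eqb (z 0%nat) b then cyl_ind (shift z) w else 0.
Proof. unfold cyl_ind. simpl length. rewrite prefix_S_front.
  destruct (list_eq_dec Bool.bool_dec (z 0%nat :: prefix (length w) (shift z)) (b :: w)) as [e|n];
  destruct (list_eq_dec Bool.bool_dec (prefix (length w) (shift z)) w) as [e'|n'].
  - injection e; intros _ ->. rewrite Bool.eqb_reflx; auto.
  - injection e; tauto.
  - destruct (Bool.eqb (z 0%nat) b) eqn:E; auto. apply Bool.eqb_prop in E.
    exfalso; apply n; rewrite E, e'; auto.
  - destruct (Bool.eqb _ _); auto. Qed.

Lemma cyl_ind_cons_sum z w : cyl_ind z (false :: w) + cyl_ind z (true :: w) = cyl_ind (shift z) w.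
Proof. rewrite !cyl_ind_cons. destruct (z 0%nat); simpl; ring. Qed.

Lemma sum_words_cyl_ind n z G : sum_words n (fun w => cyl_ind z w * G w) = G (prefix n z).
Proof. revert G; induction n; intro G.
  - unfold sum_words; simpl; unfold sumL; simpl. rewrite cyl_ind_nil.
    change (prefix 0 z) with (@nil bool). ring.
  - rewrite sum_words_snoc. rewrite (sum_words_ext_in n _ (fun w => cyl_ind z w * G (w ++ [z n]))).
    + rewrite IHn, prefix_S; auto.
    + intros w Hw. apply words_length in Hw. rewrite !cyl_ind_snoc, Hw.
      destruct (z n); simpl; ring. Qed.

Definition empirical (N : nat) (g : nat -> Sigma) (w : list bool) : R :=
  / INR N * sumN N (fun i => cyl_ind (g i) w).

Lemma empirical_nonneg N g w : 0 <= empirical N g w.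
Proof. unfold empirical. destruct N. simpl; lra. apply Rmult_le_pos.
  left; apply Rinv_0_lt_compat, lt_0_INR; lia.
  apply Rle_trans with (sumN (S N) (fun _ => 0)). rewrite sumN_const; lra.
  apply sumN_le; intros; apply cyl_ind_01. Qed.

Lemma empirical_le1 N g w : empirical N g w <= 1.
Proof. unfold empirical. destruct N. simpl. lra.
  assert (sumN (S N) (fun i => cyl_ind (g i) w) <= INR (S N)).
  { rewrite <- (Rmult_1_r (INR (S N))), <- sumN_const. apply sumN_le; intros; apply cyl_ind_01. }
  assert (0 < INR (S N)) by (apply lt_0_INR; lia).
  apply Rle_trans with (/ INR (S N) * INR (S N)). apply Rmult_le_compat_l; auto.
  left; apply Rinv_0_lt_compat; auto.
  rewrite Rinv_l; lra. Qed.

Lemma empirical_prob N g : (1 <= N)%nat -> prob_measure (empirical N g).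
Proof. intros HN. split; [apply empirical_nonneg|split].
  - unfold empirical. rewrite (sumN_ext _ _ (fun _ => 1)) by (intros; apply cyl_ind_nil).
    rewrite sumN_const. field. apply not_0_INR; lia.
  - intro w. unfold empirical. rewrite <- Rmult_plus_distr_l, <- sumN_plus. f_equal.
    apply sumN_ext. intros. symmetry; apply cyl_ind_snoc_sum. Qed.

Lemma riemann_sum_empirical N g F n :
  riemann_sum (empirical N g) F n = / INR N * sumN N (fun i => F (ext (prefix n (g i)))).
Proof. rewrite riemann_sum_words. unfold empirical.
  rewrite (sum_words_ext n _ (fun w => / INR N * sumN N (fun i => cyl_ind (g i) w * F (ext w)))).
  2:{ intro w. rewrite Rmult_assoc. f_equal. rewrite Rmult_comm, <- sumN_scal. apply sumN_ext; intros; ring. }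
  rewrite sum_words_scal, sum_words_sumN. f_equal. apply sumN_ext. intros.
  apply (sum_words_cyl_ind n (g i) (fun w => F (ext w))). Qed.

Lemma riemann_sum_empirical_close N g F (om : nat -> R) n :
  (1 <= N)%nat -> modulus F om ->
  Rabs (riemann_sum (empirical N g) F n - / INR N * sumN N (fun i => F (g i))) <= om n.
Proof. intros HN Hom. rewrite riemann_sum_empirical.
  assert (HI : 0 < / INR N) by (apply Rinv_0_lt_compat, lt_0_INR; lia).
  rewrite <- Rmult_minus_distr_l, Rabs_mult, Rabs_right by lra.
  assert (Rabs (sumN N (fun i => F (ext (prefix n (g i)))) - sumN N (fun i => F (g i))) <= INR N * om n).
  { rewrite <- sumN_const. replace (sumN N (fun i => F (ext (prefix n (g i)))) - sumN N (fun i => F (g i)))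
      with (sumN N (fun i => F (ext (prefix n (g i))) - F (g i))).
    2:{ apply sumN_minus. }
    apply Rabs_le. split.
    - apply Rle_trans with (sumN N (fun _ => - om n)).
      rewrite !sumN_const; lra. apply sumN_le. intros. pose proof (Hom n _ _ (agree_ext_prefix n (g i))) as E.
      apply Rabs_le_inv in E; lra.
    - apply sumN_le. intros. pose proof (Hom n _ _ (agree_ext_prefix n (g i))) as E.
      apply Rabs_le_inv in E; lra. }
  apply Rle_trans with (/ INR N * (INR N * om n)). apply Rmult_le_compat_l; lra.
  right. field. apply not_0_INR; lia. Qed.

Lemma periodic_empirical_inv k p :
  (1 <= k)%nat -> shiftn k p = p -> inv_prob (empirical k (fun i => shiftn i p)).
Proof. intros Hk Hp. split. apply empirical_prob; auto. intro w. unfold empirical.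
  rewrite <- Rmult_plus_distr_l, <- sumN_plus. f_equal.
  rewrite (sumN_ext _ (fun i => cyl_ind (shiftn i p) (false :: w) + cyl_ind (shiftn i p) (true :: w))
                      (fun i => cyl_ind (shiftn (S i) p) w)).
  2:{ intros. rewrite cyl_ind_cons_sum, shift_shiftn; auto. }
  rewrite (sumN_shift k (fun i => cyl_ind (shiftn i p) w)). rewrite Hp. change (shiftn 0 p) with p. ring. Qed.

(** * Compactness of Sigma *)

Section Greedy.
Variable Q : list bool -> Prop.
Hypothesis Q0 : Q [].
Hypothesis QS : forall w, Q w -> Q (w ++ [true]) \/ Q (w ++ [false]).

Fixpoint greedy_prefix (n : nat) : list bool :=
  match n with
  | O => []
  | S m => greedy_prefix m ++
             [if excluded_middle_informative (Q (greedy_prefix m ++ [true])) then true else false]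
  end.

Lemma greedy_prefix_spec n : Q (greedy_prefix n).
Proof. induction n; simpl; auto. destruct excluded_middle_informative; auto.
  destruct (QS _ IHn); tauto. Qed.

Lemma length_greedy_prefix n : length (greedy_prefix n) = n.
Proof. induction n; simpl; auto. rewrite length_app, IHn; simpl; lia. Qed.

Lemma greedy_prefix_app m n : (m <= n)%nat -> exists t, greedy_prefix n = greedy_prefix m ++ t.
Proof. induction 1. exists []; rewrite app_nil_r; auto. destruct IHle as [t Ht]. simpl. rewrite Ht.
  eexists. rewrite <- app_assoc. reflexivity. Qed.

Definition greedy_point : Sigma := fun j => nth j (greedy_prefix (S j)) false.

Lemma prefix_greedy_point n : prefix n greedy_point = greedy_prefix n.
Proof. apply nth_ext with (d := false) (d' := false). rewrite length_prefix, length_greedy_prefix; auto.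
  intros j Hj. rewrite length_prefix in Hj. rewrite nth_prefix by auto. unfold greedy_point.
  destruct (greedy_prefix_app (S j) n Hj) as [t Ht]. rewrite Ht, app_nth1; auto.
  rewrite length_greedy_prefix; lia. Qed.

End Greedy.

Lemma greedy_branch (Q : list bool -> Prop) :
  Q [] -> (forall w, Q w -> Q (w ++ [true]) \/ Q (w ++ [false])) ->
  exists c, forall n, Q (prefix n c).
Proof. intros Q0 QS. exists (greedy_point Q). intro n. rewrite prefix_greedy_point.
  apply greedy_prefix_spec; auto. Qed.

Definition infinitely_often (P : nat -> Prop) := forall N, exists k, (N <= k)%nat /\ P k.

Lemma Sigma_cluster (s : nat -> Sigma) : exists c, forall n N, exists k, (N <= k)%nat /\ agree n (s k) c.
Proof.
  destruct (greedy_branch (fun w => infinitely_often (fun k => prefix (length w) (s k) = w))) as [c Hc].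
  - intro N. exists N. split; auto.
  - intros w Hw.
    destruct (classic (infinitely_often (fun k => prefix (length (w ++ [true])) (s k) = w ++ [true])))
      as [Ht|Ht]; [left; auto|right].
    apply not_all_ex_not in Ht. destruct Ht as [N0 HN0].
    intro N. destruct (Hw (N + N0)%nat) as [k [Hk Hpk]]. exists k. split; [lia|].
    rewrite length_app. simpl length. rewrite Nat.add_1_r, prefix_S, Hpk. f_equal.
    destruct (s k (length w)) eqn:E; auto. exfalso. apply HN0. exists k. split; [lia|].
    rewrite length_app. simpl length. rewrite Nat.add_1_r, prefix_S, Hpk, E; auto.
  - exists c. intros n N. destruct (Hc n N) as [k [Hk Hp]]. exists k. split; auto.
    apply agree_prefix. rewrite length_prefix in Hp; auto. Qed.

Lemma continuous_S_uniform F : continuous_S F ->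
  forall eps, 0 < eps -> exists q, forall x y, agree q x y -> Rabs (F x - F y) < eps.
Proof. intros Hc eps He. apply NNPP. intro Hn.
  assert (Hall : forall q, exists p : Sigma * Sigma,
                   agree q (fst p) (snd p) /\ eps <= Rabs (F (fst p) - F (snd p))).
  { intro q. apply NNPP. intro Hq. apply Hn. exists q. intros x y Ha. apply Rnot_le_lt. intro Hle.
    apply Hq. exists (x, y). simpl; auto. }
  set (ps := fun q => proj1_sig (constructive_indefinite_description _ (Hall q))).
  assert (Hps : forall q, agree q (fst (ps q)) (snd (ps q)) /\
                          eps <= Rabs (F (fst (ps q)) - F (snd (ps q)))).
  { intro q. exact (proj2_sig (constructive_indefinite_description _ (Hall q))). }
  destruct (Sigma_cluster (fun q => fst (ps q))) as [c Hcl].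
  destruct (Hc c (eps / 2)) as [n Hn2]; [lra|].
  destruct (Hcl n n) as [k [Hk Hak]].
  destruct (Hps k) as [Hxy Hge].
  pose proof (Hn2 _ (agree_sym _ _ _ Hak)) as E1.
  assert (agree n c (snd (ps k))).
  { apply agree_trans with (fst (ps k)). apply agree_sym; auto. apply agree_mono with k; auto. }
  pose proof (Hn2 _ H) as E2. apply Rabs_lt_inv in E1. apply Rabs_lt_inv in E2.
  assert (Rabs (F (fst (ps k)) - F (snd (ps k))) < eps) by (apply Rabs_def1; lra). lra.
Qed.

Fixpoint bin_rem (t : R) (j : nat) : R :=
  match j with O => t | S i => 2 * bin_rem t i - (if Rle_dec 1 (2 * bin_rem t i) then 1 else 0) end.
Definition bin_digit (t : R) (j : nat) : bool := if Rle_dec 1 (2 * bin_rem t j) then true else false.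
Definition bit_val (b : bool) : R := if b then 1 else 0.
Definition bin_partial (d : nat -> bool) (J : nat) : R := sumN J (fun j => bit_val (d j) * (/ 2) ^ (S j)).

Lemma bin_rem_bounds t : 0 <= t <= 1 -> forall j, 0 <= bin_rem t j <= 1.
Proof. intros Ht j; induction j; simpl; auto. destruct Rle_dec; lra. Qed.

Lemma bin_digit_spec t : 0 <= t <= 1 -> forall J, t = bin_partial (bin_digit t) J + bin_rem t J * (/ 2) ^ J.
Proof. intros Ht J; induction J. unfold bin_partial; simpl; ring.
  unfold bin_partial in *; simpl sumN. rewrite IHJ at 1. unfold bin_digit, bit_val. simpl bin_rem. simpl pow.
  destruct (Rle_dec 1 (2 * bin_rem t J)); field. Qed.

Lemma bin_partial_step d J J' : (J <= J')%nat ->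
  bin_partial d J <= bin_partial d J' <= bin_partial d J + (/ 2) ^ J - (/ 2) ^ J'.
Proof. induction 1. lra. unfold bin_partial in *; cbn [sumN]. change ((/2)^(S m)) with (/2 * (/2)^m).
  assert (0 <= bit_val (d m) <= 1) by (unfold bit_val; destruct (d m); lra).
  assert (0 < (/2) ^ m) by (apply pow_lt; lra).
  set (p := (/2) ^ m) in *. assert (0 <= bit_val (d m) * (/ 2 * p) <= / 2 * p) by nra. lra. Qed.

Lemma bin_partial_ub d J : bin_partial d J <= 1.
Proof. pose proof (bin_partial_step d 0 J ltac:(lia)). assert (bin_partial d 0 = 0) by reflexivity.
  rewrite pow_O in H.
  assert (0 < (/2) ^ J) by (apply pow_lt; lra). lra. Qed.

Lemma bin_partial_growing d : Un_growing (bin_partial d).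
Proof. intro n. apply (bin_partial_step d n (S n)); lia. Qed.
Lemma bin_partial_has_ub d : has_ub (bin_partial d).
Proof. exists 1. intros r [i ->]. apply bin_partial_ub. Qed.

Definition bin_value (d : nat -> bool) : R :=
  proj1_sig (growing_cv _ (bin_partial_growing d) (bin_partial_has_ub d)).
Lemma bin_value_cv d : Un_cv (bin_partial d) (bin_value d).
Proof. exact (proj2_sig (growing_cv _ (bin_partial_growing d) (bin_partial_has_ub d))). Qed.

Lemma bin_value_bounds d J : bin_partial d J <= bin_value d <= bin_partial d J + (/ 2) ^ J.
Proof. split.
  - apply (cv_ge_const_ev (bin_partial d) _ _ J); [|apply bin_value_cv]. intros; apply bin_partial_step; auto.
  - apply (cv_le_const_ev (bin_partial d) _ _ J); [|apply bin_value_cv]. intros n Hn.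
    pose proof (bin_partial_step d J n Hn). assert (0 < (/2) ^ n) by (apply pow_lt; lra). lra. Qed.

Lemma bin_value_close t d J : 0 <= t <= 1 ->
  (forall j, (j < J)%nat -> d j = bin_digit t j) -> Rabs (t - bin_value d) <= (/ 2) ^ J.
Proof. intros Ht Hd. pose proof (bin_digit_spec t Ht J). pose proof (bin_rem_bounds t Ht J).
  pose proof (bin_value_bounds d J). assert (bin_partial d J = bin_partial (bin_digit t) J).
  { unfold bin_partial. apply sumN_ext. intros; rewrite Hd; auto. }
  assert (0 < (/2) ^ J) by (apply pow_lt; lra). apply Rabs_le. nra. Qed.

Definition bit_nat (b : bool) : nat := if b then 1%nat else 0%nat.
Fixpoint word_code (w : list bool) : nat :=
  match w with [] => 0%nat | b :: w' => S (to_nat (bit_nat b, word_code w')) end.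
Fixpoint word_decode_fuel (fuel n : nat) : list bool :=
  match fuel, n with
  | S f, S m => Nat.eqb (fst (of_nat m)) 1 :: word_decode_fuel f (snd (of_nat m))
  | _, _ => []
  end.
Definition word_decode (n : nat) : list bool := word_decode_fuel (S n) n.

Lemma word_decode_fuel_code w :
  forall fuel, (word_code w < fuel)%nat -> word_decode_fuel fuel (word_code w) = w.
Proof. induction w as [|b w IH]; intros fuel Hf.
  - destruct fuel; [cbn [word_code] in Hf; lia| reflexivity].
  - destruct fuel as [|f]; [cbn [word_code] in Hf; lia|]. cbn [word_code word_decode_fuel].
    rewrite cancel_of_to. cbn [fst snd]. f_equal.
    destruct b; reflexivity. apply IH. cbn [word_code] in Hf.
    pose proof (to_nat_non_decreasing (bit_nat b) (word_code w)). lia. Qed.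

Lemma word_decode_code w : word_decode (word_code w) = w.
Proof. apply word_decode_fuel_code; lia. Qed.

Lemma list_max_in x L : In x L -> (x <= list_max L)%nat.
Proof. intros Hin. assert (Forall (fun k => k <= list_max L)%nat L) by (apply list_max_le; auto).
  rewrite Forall_forall in H; auto. Qed.

Definition cluster_of (nu : nat -> list bool -> R) (mu : list bool -> R) : Prop :=
  forall M eps N, 0 < eps -> exists k, (N <= k)%nat /\
    forall w, (length w <= M)%nat -> Rabs (nu k w - mu w) < eps.

(* Diagonal extraction: the binary digits of all the values [nu k w] are packed,
   through Cantor pairing, into a single point of Sigma; a cluster point of these
   codes decodes to [mu]. *)
Lemma cylinder_cluster (nu : nat -> list bool -> R) : (forall k w, 0 <= nu k w <= 1) ->
  exists mu, cluster_of nu mu.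
Proof. intros Hnu.
  set (codek := fun k n => bin_digit (nu k (word_decode (fst (of_nat n)))) (snd (of_nat n))).
  destruct (Sigma_cluster codek) as [c Hc].
  exists (fun w => bin_value (fun j => c (to_nat (word_code w, j)))).
  intros M eps N He.
  destruct (pow_lt_1_zero (/2) ltac:(rewrite Rabs_right; lra) eps He) as [J HJ].
  specialize (HJ J (le_n J)). rewrite Rabs_right in HJ by (left; apply pow_lt; lra).
  set (Fl := flat_map (fun m => flat_map (fun w => map (fun j => to_nat (word_code w, j)) (seq 0 J))
                                         (words m)) (seq 0 (S M))).
  destruct (Hc (S (list_max Fl)) N) as [k [Hk Hag]]. exists k. split; auto.
  intros w Hw. eapply Rle_lt_trans; [|apply HJ]. apply bin_value_close; auto.
  intros j Hj. assert (Hin : In (to_nat (word_code w, j)) Fl).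
  { unfold Fl. apply in_flat_map. exists (length w). split. apply in_seq; lia.
    apply in_flat_map. exists w. split. apply in_words.
    apply (in_map (fun j => to_nat (word_code w, j))). apply in_seq; lia. }
  apply list_max_in in Hin. rewrite <- (Hag (to_nat (word_code w, j))) by lia. unfold codek.
  rewrite cancel_of_to. simpl. rewrite word_decode_code. auto.
Qed.

Lemma cluster_of_prob nu mu :
  (forall k, (1 <= k)%nat -> prob_measure (nu k)) -> cluster_of nu mu -> prob_measure mu.
Proof. intros Hnu Hmu. split; [|split].
  - intro w. apply Rle_plus_epsilon. intros eps He. destruct (Hmu (length w) eps 1%nat He) as [k [Hk Hkw]].
    specialize (Hkw w (le_n _)). apply Rabs_lt_inv in Hkw. destruct (Hnu k Hk) as [Hp _].
    specialize (Hp w). lra.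
  - apply eq_of_Rabs_lt_all. intros eps He. destruct (Hmu 0%nat eps 1%nat He) as [k [Hk Hkw]].
    specialize (Hkw [] (le_n _)). destruct (Hnu k Hk) as [_ [H1 _]].
    rewrite H1 in Hkw. rewrite Rabs_minus_sym; auto.
  - intro w. apply eq_of_Rabs_lt_all. intros eps He.
    destruct (Hmu (S (length w)) (eps / 3) 1%nat) as [k [Hk Hkw]]; [lra|].
    destruct (Hnu k Hk) as [_ [_ Ha]].
    pose proof (Hkw w ltac:(lia)) as E1.
    pose proof (Hkw (w ++ [false]) ltac:(rewrite length_app; simpl; lia)) as E2.
    pose proof (Hkw (w ++ [true]) ltac:(rewrite length_app; simpl; lia)) as E3.
    rewrite (Ha w) in E1. apply Rabs_lt_inv in E1; apply Rabs_lt_inv in E2; apply Rabs_lt_inv in E3.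
    apply Rabs_def1; lra. Qed.

Lemma cluster_of_invariant nu mu :
  (forall k w, (1 <= k)%nat -> Rabs (nu k w - (nu k (false :: w) + nu k (true :: w))) <= / INR k) ->
  cluster_of nu mu -> invariant mu.
Proof. intros Hnu Hmu w. apply eq_of_Rabs_lt_all. intros eps He.
  destruct (inv_INR_small (eps / 4)) as [N [HN1 HN]]; [lra|].
  destruct (Hmu (S (length w)) (eps / 4) N) as [k [Hk Hkw]]; [lra|].
  pose proof (Hkw w ltac:(lia)) as E1. pose proof (Hkw (false :: w) ltac:(simpl; lia)) as E2.
  pose proof (Hkw (true :: w) ltac:(simpl; lia)) as E3. pose proof (Hnu k w ltac:(lia)) as E4.
  specialize (HN k Hk). apply Rabs_lt_inv in E1; apply Rabs_lt_inv in E2; apply Rabs_lt_inv in E3.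
  apply Rabs_le_inv in E4. apply Rabs_def1; lra. Qed.

(* If the orbit avoided the cylinder [prefix p x] from time n on, its empirical
   measures of that cylinder would be at most n / k, against mu (prefix p x) > 0. *)
Lemma cluster_empirical_visits g mu x : cluster_of (fun k => empirical k g) mu -> in_support mu x ->
  forall n p, exists i, (n <= i)%nat /\ agree p (g i) x.
Proof. intros Hmu Hx n p. apply NNPP. intro Hno.
  set (al := mu (prefix p x)). assert (Hal : 0 < al) by apply Hx.
  destruct (INR_unbounded (2 * INR n / al)) as [N0 HN0].
  destruct (Hmu p (al / 2) (S N0)) as [k [Hk Hkw]]; [lra|].
  specialize (Hkw (prefix p x) ltac:(rewrite length_prefix; lia)). fold al in Hkw.
  apply Rabs_lt_inv in Hkw. unfold empirical in Hkw.
  assert (Hsb : sumN k (fun i => cyl_ind (g i) (prefix p x)) <= INR n).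
  { apply sumN_le_support. intros; apply cyl_ind_01. intros i Hi.
    unfold cyl_ind. rewrite length_prefix. destruct list_eq_dec as [e|]; auto. exfalso.
    apply Hno. exists i. split; auto. apply agree_prefix; auto. }
  assert (HkI : 0 < INR k) by (apply lt_0_INR; lia).
  assert (HkN : INR N0 < INR k) by (apply lt_INR; lia).
  assert (sumN k (fun i => cyl_ind (g i) (prefix p x)) > INR k * (al / 2)).
  { apply Rmult_lt_reg_l with (/ INR k). apply Rinv_0_lt_compat; auto.
    rewrite <- Rmult_assoc, Rinv_l, Rmult_1_l by lra. lra. }
  assert (INR N0 * al > 2 * INR n).
  { unfold Rdiv in HN0. apply Rmult_lt_reg_r with (/ al). apply Rinv_0_lt_compat; auto.
    replace (INR N0 * al * / al) with (INR N0) by (field; lra). lra. }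
  nra. Qed.

Lemma support_shift mu : inv_prob mu -> forall z, in_support mu z -> in_support mu (shift z).
Proof. intros [[Hp _] Hinv] z Hs n. rewrite (Hinv (prefix n (shift z))).
  pose proof (Hs (S n)) as Hpos. rewrite prefix_S_front in Hpos.
  pose proof (Hp (false :: prefix n (shift z))). pose proof (Hp (true :: prefix n (shift z))).
  destruct (z 0%nat); lra. Qed.

Lemma support_shiftn mu : inv_prob mu -> forall k z, in_support mu z -> in_support mu (shiftn k z).
Proof. intros Hmu k; induction k; intros z Hs; auto. rewrite <- shift_shiftn. apply support_shift; auto. Qed.

Lemma support_nonempty mu : prob_measure mu -> exists x, in_support mu x.
Proof. intros [Hnn [H1 Hadd]]. apply (greedy_branch (fun w => 0 < mu w)).
  - rewrite H1; lra.
  - intros w Hw. rewrite (Hadd w) in Hw. pose proof (Hnn (w ++ [false])). pose proof (Hnn (w ++ [true])).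
    destruct (Rlt_dec 0 (mu (w ++ [true]))); [left; auto| right; lra]. Qed.

Lemma periodize z k : (1 <= k)%nat ->
  exists p, shiftn k p = p /\ agree k z p.
Proof. intros Hk. exists (fun j => z (j mod k)%nat). split.
  - apply functional_extensionality; intro j; unfold shiftn. f_equal.
    replace (k + j)%nat with (j + 1 * k)%nat by lia. apply Nat.Div0.mod_add.
  - intros j Hj. rewrite Nat.mod_small by lia. auto. Qed.

(** * Birkhoff sums and the sub-action [arrival_inf] *)

Section Main.
Variables (H : Sigma -> R) (Hbar : R) (v : nat -> R) (l : R).
Hypothesis Hv : forall n, var_is H n (v n).
Hypothesis Hl : Un_cv (fun N => sum_f_R0 v N) l.

(* [tail m] is the bound sum_{k >= m+1} var(H,k) appearing in the definition of K. *)
Definition tail (m : nat) : R := l - sum_f_R0 v m.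
Notation B := (birkhoff H Hbar).

Lemma var_nonneg n : 0 <= v n.
Proof. destruct (Hv n) as [Hu _]. apply Hu. exists (fun _ => false), (fun _ => false). split.
  apply agree_refl. rewrite Rminus_diag, Rabs_R0; auto. Qed.

Lemma var_bound : modulus H v.
Proof. intros n x y Ha. destruct (Hv n) as [Hu _]. apply Hu. exists x, y; auto. Qed.

Lemma sum_var_le N : sum_f_R0 v N <= l.
Proof. apply sum_incr; auto. apply var_nonneg. Qed.

Lemma tail_nonneg m : 0 <= tail m.
Proof. unfold tail; pose proof (sum_var_le m); lra. Qed.

Lemma tail_S m : tail (S m) = tail m - v (S m).
Proof. unfold tail; simpl; ring. Qed.

Lemma tail_cv0 : Un_cv tail 0.
Proof. intros e He. destruct (Hl e He) as [N HN]. exists N. intros n Hn. specialize (HN n Hn).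
  unfold R_dist, tail in *. rewrite Rabs_minus_sym in HN. rewrite Rminus_0_r. auto. Qed.

Lemma tail_pred_cv0 : Un_cv (fun n => tail (pred n)) 0.
Proof. apply Un_cv_of_S, tail_cv0. Qed.

Lemma var_cv0 : Un_cv v 0.
Proof. apply Un_cv_of_S. intros e He. destruct (tail_cv0 e He) as [N HN]. exists N. intros n Hn.
  specialize (HN n Hn). unfold R_dist in *. rewrite Rminus_0_r in *.
  pose proof (tail_nonneg (S n)). rewrite tail_S in H0. pose proof (var_nonneg (S n)).
  pose proof (tail_nonneg n). rewrite Rabs_right in * by lra. lra. Qed.

Lemma sum_var_le_tail m k : sumN k (fun i => v (m + 1 + i)%nat) <= tail m.
Proof. assert (Hsplit : sum_f_R0 v (m + k) = sum_f_R0 v m + sumN k (fun i => v (m + 1 + i)%nat)).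
  { induction k. rewrite Nat.add_0_r; simpl; ring. rewrite Nat.add_succ_r. simpl. rewrite IHk.
    replace (S (m + k)) with (m + 1 + k)%nat by lia. ring. }
  pose proof (sum_var_le (m + k)). unfold tail. lra. Qed.

Lemma birkhoff_diff_le_sum_var k : forall m z z', agree (k + m) z z' ->
  Rabs (B z k - B z' k) <= sumN k (fun i => v (m + 1 + i)%nat).
Proof. induction k; intros m z z' Ha. simpl. rewrite Rminus_diag, Rabs_R0; lra.
  rewrite !birkhoff_front. simpl (sumN (S k) _).
  assert (Ha' : agree (k + m) (shift z) (shift z'))
    by (apply agree_shift; replace (S (k + m)) with (S k + m)%nat by lia; auto).
  pose proof (IHk m _ _ Ha') as E1.
  pose proof (var_bound _ _ _ Ha) as E2.
  replace (S k + m)%nat with (m + 1 + k)%nat in E2 by lia.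
  apply Rabs_le_inv in E1. apply Rabs_le_inv in E2. apply Rabs_le. lra. Qed.

Lemma birkhoff_bowen k m z z' : agree (k + m) z z' -> Rabs (B z k - B z' k) <= tail m.
Proof. intros. eapply Rle_trans. apply (birkhoff_diff_le_sum_var k m z z'); auto. apply sum_var_le_tail. Qed.

Hypothesis HHbar : Hbar_is H Hbar.

Lemma periodic_birkhoff_nonneg p k : (1 <= k)%nat -> shiftn k p = p -> 0 <= B p k.
Proof. intros Hk Hp.
  set (mu := empirical k (fun i => shiftn i p)).
  assert (Hinv : inv_prob mu) by (apply periodic_empirical_inv; auto).
  destruct (integral_exists mu (proj1 Hinv) H v var_bound var_cv0) as [I [HI HIb]].
  assert (HbI : Hbar <= I) by (apply (is_inf_le _ _ _ HHbar); exists mu; auto).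
  set (avg := / INR k * sumN k (fun i => H (shiftn i p))).
  assert (Havg : Hbar <= avg).
  { apply Rle_plus_epsilon. intros eps He. destruct (var_cv0 (eps/2)) as [n Hn]; [lra|].
    specialize (Hn n (le_n n)). unfold R_dist in Hn. rewrite Rminus_0_r in Hn.
    pose proof (var_nonneg n). rewrite Rabs_right in Hn by lra.
    pose proof (HIb n) as E1.
    pose proof (riemann_sum_empirical_close k (fun i => shiftn i p) H v n Hk var_bound) as E2.
    fold mu in E2. unfold avg. apply Rabs_le_inv in E1. apply Rabs_le_inv in E2. lra. }
  rewrite birkhoff_sumN, sumN_minus, sumN_const.
  assert (INR k * Hbar <= INR k * avg) by (apply Rmult_le_compat_l; auto; apply pos_INR).
  unfold avg in H0. rewrite <- Rmult_assoc, Rinv_r, Rmult_1_l in H0 by (apply not_0_INR; lia). lra.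
Qed.

Lemma birkhoff_lower_bound z k : - tail 0 <= B z k.
Proof.
  destruct k as [|k]. { simpl; pose proof (tail_nonneg 0); lra. }
  destruct (periodize z (S k) ltac:(lia)) as [p [Hp Hag]].
  pose proof (periodic_birkhoff_nonneg p (S k) ltac:(lia) Hp).
  rewrite <- (Nat.add_0_r (S k)) in Hag.
  pose proof (birkhoff_bowen _ _ _ _ Hag) as E. apply Rabs_le_inv in E. lra.
Qed.

Definition arrival y := fun r => exists k z, shiftn k z = y /\ r = B z k.

Lemma arrival_ne y : exists r, arrival y r.
Proof. exists 0, 0%nat, y. split; reflexivity. Qed.

Lemma arrival_lb y r : arrival y r -> - tail 0 <= r.
Proof. intros [k [z [_ ->]]]. apply birkhoff_lower_bound. Qed.

Definition arrival_inf y := proj1_sig (inf_exists (arrival y) (- tail 0) (arrival_ne y) (arrival_lb y)).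

Lemma arrival_inf_spec y : is_inf (arrival y) (arrival_inf y).
Proof. exact (proj2_sig (inf_exists (arrival y) (- tail 0) (arrival_ne y) (arrival_lb y))). Qed.

Lemma arrival_inf_le0 y : arrival_inf y <= 0.
Proof. apply (is_inf_le _ _ _ (arrival_inf_spec y)). exists 0%nat, y; split; reflexivity. Qed.

Lemma arrival_inf_ge y : - tail 0 <= arrival_inf y.
Proof. apply (is_inf_ge _ _ _ (arrival_inf_spec y)). apply arrival_lb. Qed.

Lemma arrival_inf_sub y : arrival_inf (shift y) <= arrival_inf y + (H y - Hbar).
Proof. assert (arrival_inf (shift y) - (H y - Hbar) <= arrival_inf y); [|lra].
  apply (is_inf_ge _ _ _ (arrival_inf_spec y)). intros r [k [z [Hz ->]]].
  assert (arrival_inf (shift y) <= B z (S k)).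
  { apply (is_inf_le _ _ _ (arrival_inf_spec (shift y))). exists (S k), z. split; auto.
    rewrite <- shift_shiftn, Hz; auto. }
  simpl in H0. rewrite Hz in H0. lra. Qed.

Lemma arrival_inf_var_le n y y' : agree n y y' -> arrival_inf y <= arrival_inf y' + tail n.
Proof. intros Ha. assert (arrival_inf y - tail n <= arrival_inf y'); [|lra].
  apply (is_inf_ge _ _ _ (arrival_inf_spec y')). intros r [k [z [Hz ->]]].
  set (z' := cat (prefix k z) y).
  assert (arrival_inf y <= B z' k).
  { apply (is_inf_le _ _ _ (arrival_inf_spec y)). exists k, z'. split; auto. apply shiftn_cat_prefix. }
  assert (Hag : agree (k + n) z' z) by (apply agree_cat_prefix_shiftn; rewrite Hz; auto).
  pose proof (birkhoff_bowen k n z' z Hag) as E. apply Rabs_le_inv in E. lra. Qed.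

Lemma arrival_inf_var : modulus arrival_inf tail.
Proof. intros n y y' Ha. apply Rabs_le.
  pose proof (arrival_inf_var_le n y y' Ha). pose proof (arrival_inf_var_le n y' y (agree_sym _ _ _ Ha)).
  lra. Qed.

Definition defect z := H z - Hbar + arrival_inf z - arrival_inf (shift z).

Lemma defect_nonneg z : 0 <= defect z.
Proof. unfold defect. pose proof (arrival_inf_sub z). lra. Qed.

Lemma defect_modulus : modulus defect (fun n => v n + tail n + tail (pred n)).
Proof. intros n x y Ha. unfold defect.
  assert (Hs : agree (pred n) (shift x) (shift y)) by (destruct n; [apply agree_0 | apply agree_shift; auto]).
  pose proof (var_bound n x y Ha) as E1. pose proof (arrival_inf_var n x y Ha) as E2.
  pose proof (arrival_inf_var _ _ _ Hs) as E3.
  apply Rabs_le_inv in E1; apply Rabs_le_inv in E2; apply Rabs_le_inv in E3. apply Rabs_le; lra. Qed.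

Lemma defect_modulus_cv0 : Un_cv (fun n => v n + tail n + tail (pred n)) 0.
Proof. replace 0 with (0 + 0 + 0) by ring.
  apply CV_plus; [apply CV_plus|]; [apply var_cv0 | apply tail_cv0 | apply tail_pred_cv0]. Qed.

Lemma minimizing_defect_integral0 mu : minimizing H Hbar mu -> Un_cv (riemann_sum mu defect) 0.
Proof. intros [Hinv Hint]. assert (Hprob : prob_measure mu) by apply Hinv.
  destruct (integral_exists mu Hprob arrival_inf tail arrival_inf_var tail_cv0) as [Iu [HIu _]].
  assert (HIus : Un_cv (riemann_sum mu (fun z => arrival_inf (shift z))) Iu).
  { apply Un_cv_of_S. apply (Un_cv_ext (riemann_sum mu arrival_inf)); auto.
    intro n. symmetry. apply riemann_shift; auto. }
  apply (Un_cv_ext (fun n => riemann_sum mu H n - Hbar + riemann_sum mu arrival_inf n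
                             - riemann_sum mu (fun z => arrival_inf (shift z)) n)).
  - intro n. unfold defect. rewrite riemann_minus, riemann_plus, riemann_minus, riemann_const; auto.
  - replace 0 with (Hbar - Hbar + Iu - Iu) by ring.
    apply CV_minus; auto. apply CV_plus; auto. apply CV_minus; auto. apply Un_cv_const.
Qed.

Lemma Mather_birkhoff_bounded x : Mather H Hbar x -> forall k, B x k <= tail 0.
Proof. intros [mu [Hmin Hs]].
  assert (Hz : forall i, defect (shiftn i x) = 0).
  { intro i. apply (zero_on_support mu (proj1 (proj1 Hmin)) defect _ defect_modulus defect_modulus_cv0
      defect_nonneg (minimizing_defect_integral0 mu Hmin)).
    apply support_shiftn; [apply Hmin | auto]. }
  assert (HB : forall k, B x k = arrival_inf (shiftn k x) - arrival_inf x).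
  { induction k. simpl. change (shiftn 0 x) with x. ring. simpl. rewrite IHk.
    specialize (Hz k). unfold defect in Hz. rewrite shift_shiftn in Hz. lra. }
  intro k. rewrite HB. pose proof (arrival_inf_le0 (shiftn k x)). pose proof (arrival_inf_ge x). lra. Qed.

(** * The Peierls barrier *)

Section Peierls.
Variable x : Sigma.
Hypothesis Hx : Mather H Hbar x.

Definition barrier_set (n p : nat) (y : Sigma) := fun r =>
  exists k z, (n <= k)%nat /\ agree p z x /\ agree p (shiftn k z) y /\ r = B z k.

Lemma barrier_set_witness n p y : barrier_set n p y (B (cat (prefix (n + p) x) y) (n + p)).
Proof. exists (n + p)%nat, (cat (prefix (n + p) x) y). split; [lia|]. split.
  apply agree_mono with (n + p)%nat; [lia|]. apply agree_cat_prefix. split; auto.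
  rewrite shiftn_cat_prefix. apply agree_refl. Qed.

Lemma barrier_set_ne n p y : exists r, barrier_set n p y r.
Proof. eexists; apply barrier_set_witness. Qed.
Lemma barrier_set_lb n p y r : barrier_set n p y r -> - tail 0 <= r.
Proof. intros [k [z [_ [_ [_ ->]]]]]. apply birkhoff_lower_bound. Qed.

Definition barrier n p y :=
  proj1_sig (inf_exists (barrier_set n p y) (- tail 0) (barrier_set_ne n p y) (barrier_set_lb n p y)).

Lemma barrier_spec n p y : is_inf (barrier_set n p y) (barrier n p y).
Proof. exact (proj2_sig (inf_exists _ _ (barrier_set_ne n p y) (barrier_set_lb n p y))). Qed.

Lemma barrier_ub n p y : barrier n p y <= 2 * tail 0.
Proof. eapply Rle_trans. apply (is_inf_le _ _ _ (barrier_spec n p y)). apply barrier_set_witness.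
  assert (Hag : agree (n + p + 0) (cat (prefix (n + p) x) y) x).
  { rewrite Nat.add_0_r. apply agree_cat_prefix. }
  pose proof (birkhoff_bowen _ _ _ _ Hag) as E1. apply Rabs_le_inv in E1.
  pose proof (Mather_birkhoff_bounded x Hx (n + p)). lra. Qed.

Lemma barrier_mono_n n p y : barrier n p y <= barrier (S n) p y.
Proof. apply (is_inf_mono (barrier_set n p y) (barrier_set (S n) p y)); [|apply barrier_spec..].
  intros r [k [z [Hk R]]]. exists k, z. split; auto. lia. Qed.

Lemma barrier_mono_p n p y : barrier n p y <= barrier n (S p) y.
Proof. apply (is_inf_mono (barrier_set n p y) (barrier_set n (S p) y)); [|apply barrier_spec..].
  intros r [k [z [Hk [H1 [H2 H3]]]]]. exists k, z. repeat split; auto.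
  apply agree_mono with (S p); auto. apply agree_mono with (S p); auto. Qed.

Lemma barrier_growing p y : Un_growing (fun n => barrier n p y).
Proof. intro n. apply barrier_mono_n. Qed.
Lemma barrier_has_ub p y : has_ub (fun n => barrier n p y).
Proof. exists (2 * tail 0). intros r [i ->]. apply barrier_ub. Qed.

Definition peierls_p p y := proj1_sig (growing_cv _ (barrier_growing p y) (barrier_has_ub p y)).
Lemma peierls_p_cv p y : Un_cv (fun n => barrier n p y) (peierls_p p y).
Proof. exact (proj2_sig (growing_cv _ (barrier_growing p y) (barrier_has_ub p y))). Qed.

Lemma peierls_p_ub p y : peierls_p p y <= 2 * tail 0.
Proof. apply (cv_le_const_ev _ _ _ 0 (fun n _ => barrier_ub n p y) (peierls_p_cv p y)). Qed.

Lemma peierls_p_growing y : Un_growing (fun p => peierls_p p y).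
Proof. intro p. exact (Rle_cv_lim (fun n => barrier_mono_p n p y) (peierls_p_cv p y) (peierls_p_cv (S p) y)).
Qed.
Lemma peierls_p_has_ub y : has_ub (fun p => peierls_p p y).
Proof. exists (2 * tail 0). intros r [i ->]. apply peierls_p_ub. Qed.

Definition peierls y := proj1_sig (growing_cv _ (peierls_p_growing y) (peierls_p_has_ub y)).
Lemma peierls_cv y : Un_cv (fun p => peierls_p p y) (peierls y).
Proof. exact (proj2_sig (growing_cv _ (peierls_p_growing y) (peierls_p_has_ub y))). Qed.

Lemma peierls_is_peierls y : peierls_is H Hbar x y (peierls y).
Proof. exists (fun n p => barrier n p y), (fun p => peierls_p p y). split; [|split].
  - intros n p. apply barrier_spec.
  - intro p. apply peierls_p_cv.
  - apply peierls_cv. Qed.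

Lemma barrier_var_le n0 N p y y' : (n0 <= p)%nat -> (p <= N)%nat -> agree n0 y y' ->
  barrier N p y <= barrier N p y' + tail n0.
Proof. intros Hnp HpN Ha. assert (barrier N p y - tail n0 <= barrier N p y'); [|lra].
  apply (is_inf_ge _ _ _ (barrier_spec N p y')). intros r [k [z [Hk [H1 [H2 ->]]]]].
  set (z' := cat (prefix k z) y).
  assert (barrier N p y <= B z' k).
  { apply (is_inf_le _ _ _ (barrier_spec N p y)). exists k, z'. repeat split; auto.
    - apply agree_trans with z; auto. apply agree_mono with k; [lia|]. apply agree_cat_prefix.
    - unfold z'. rewrite shiftn_cat_prefix. apply agree_refl. }
  assert (Hag : agree (k + n0) z' z).
  { apply agree_cat_prefix_shiftn. apply agree_trans with y'; auto. apply agree_sym.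
    apply agree_mono with p; auto. }
  pose proof (birkhoff_bowen k n0 z' z Hag) as E1. apply Rabs_le_inv in E1. lra. Qed.

Lemma peierls_p_var_le n0 p y y' : (n0 <= p)%nat -> agree n0 y y' ->
  peierls_p p y <= peierls_p p y' + tail n0.
Proof. intros Hp Ha.
  apply (Rle_cv_lim_ev (fun n => barrier n p y) (fun n => barrier n p y' + tail n0) _ _ p).
  intros; apply barrier_var_le; auto. apply peierls_p_cv. apply CV_plus. apply peierls_p_cv.
  apply Un_cv_const. Qed.

Lemma peierls_var_le n0 y y' : agree n0 y y' -> peierls y <= peierls y' + tail n0.
Proof. intros Ha.
  apply (Rle_cv_lim_ev (fun p => peierls_p p y) (fun p => peierls_p p y' + tail n0) _ _ n0).
  intros; apply peierls_p_var_le; auto. apply peierls_cv. apply CV_plus. apply peierls_cv.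
  apply Un_cv_const. Qed.

Lemma peierls_var : modulus peierls tail.
Proof. intros n0 y y' Ha. apply Rabs_le.
  pose proof (peierls_var_le n0 y y' Ha). pose proof (peierls_var_le n0 y' y (agree_sym _ _ _ Ha)). lra. Qed.

Lemma barrier_sub n p a y :
  barrier (S n) p y <= barrier n (S p) (bcons a y) + (H (bcons a y) - Hbar) + v (S p).
Proof. assert (barrier (S n) p y - (H (bcons a y) - Hbar) - v (S p) <= barrier n (S p) (bcons a y)); [|lra].
  apply (is_inf_ge _ _ _ (barrier_spec n (S p) (bcons a y))). intros r [k [z [Hk [H1 [H2 ->]]]]].
  assert (barrier (S n) p y <= B z (S k)).
  { apply (is_inf_le _ _ _ (barrier_spec (S n) p y)). exists (S k), z. repeat split; auto. lia.
    apply agree_mono with (S p); auto. rewrite <- shift_shiftn. rewrite <- (shift_bcons a y).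
    apply agree_shift; auto. }
  simpl in H0. pose proof (var_bound _ _ _ H2) as E1. apply Rabs_le_inv in E1. lra. Qed.

Lemma peierls_p_sub p a y :
  peierls_p p y <= peierls_p (S p) (bcons a y) + (H (bcons a y) - Hbar) + v (S p).
Proof.
  apply (Rle_cv_lim_ev (fun n => barrier (S n) p y)
           (fun n => barrier n (S p) (bcons a y) + (H (bcons a y) - Hbar) + v (S p)) _ _ 0).
  - intros; apply barrier_sub.
  - apply (Un_cv_S (fun n => barrier n p y)). apply peierls_p_cv.
  - apply CV_plus. apply CV_plus. apply peierls_p_cv. apply Un_cv_const. apply Un_cv_const. Qed.

Lemma peierls_sub a y : peierls y <= peierls (bcons a y) + (H (bcons a y) - Hbar).
Proof.
  apply (Rle_cv_lim_ev (fun p => peierls_p p y)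
           (fun p => peierls_p (S p) (bcons a y) + (H (bcons a y) - Hbar) + v (S p)) _ _ 0).
  - intros; apply peierls_p_sub.
  - apply peierls_cv.
  - rewrite <- (Rplus_0_r (_ + _)).
    apply CV_plus; [apply CV_plus|].
    + apply (Un_cv_S (fun p => peierls_p p (bcons a y))), peierls_cv.
    + apply Un_cv_const.
    + apply (Un_cv_S v), var_cv0. Qed.

(* T[F](y) - Hbar, the two preimages of y being [bcons false y] and [bcons true y]. *)
Definition lax_oleinik (F : Sigma -> R) y :=
  Rmin (F (bcons false y) + (H (bcons false y) - Hbar)) (F (bcons true y) + (H (bcons true y) - Hbar)).

(* A path of length k + 1 ending near y passes, after k steps, near a preimage of y. *)
Lemma barrier_cal n p y : lax_oleinik (barrier n p) y - v (S p) <= barrier (S n) p y.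
Proof. apply (is_inf_ge _ _ _ (barrier_spec (S n) p y)). intros r [k [z [Hk [H1 [H2 ->]]]]].
  destruct k as [|k']; [lia|]. set (a := z k'). set (q := shiftn k' z).
  assert (Hq : agree (S p) q (bcons a y)).
  { intros [|j] Hj; unfold q, a, shiftn; simpl. f_equal; lia.
    rewrite <- (H2 j) by lia. unfold shiftn. f_equal; lia. }
  assert (barrier n p (bcons a y) <= B z k').
  { apply (is_inf_le _ _ _ (barrier_spec n p (bcons a y))). exists k', z. repeat split; auto. lia.
    apply agree_mono with (S p); auto. }
  simpl. fold q. pose proof (var_bound _ _ _ Hq) as E1. apply Rabs_le_inv in E1.
  assert (lax_oleinik (barrier n p) y <= barrier n p (bcons a y) + (H (bcons a y) - Hbar)).
  { unfold lax_oleinik. destruct a. apply Rmin_r. apply Rmin_l. }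
  lra. Qed.

Lemma peierls_p_cal p y : lax_oleinik (peierls_p p) y - v (S p) <= peierls_p p y.
Proof.
  apply (Rle_cv_lim_ev (fun n => lax_oleinik (barrier n p) y - v (S p)) (fun n => barrier (S n) p y) _ _ 0).
  - intros; apply barrier_cal.
  - apply CV_minus. unfold lax_oleinik.
    apply CV_min; apply CV_plus; try apply peierls_p_cv; apply Un_cv_const.
    apply Un_cv_const.
  - apply (Un_cv_S (fun n => barrier n p y)). apply peierls_p_cv. Qed.

Lemma peierls_cal y : lax_oleinik peierls y <= peierls y.
Proof.
  apply (Rle_cv_lim_ev (fun p => lax_oleinik (peierls_p p) y - v (S p)) (fun p => peierls_p p y) _ _ 0).
  - intros; apply peierls_p_cal.
  - replace (lax_oleinik peierls y) with (lax_oleinik peierls y - 0) by ring. apply CV_minus.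
    unfold lax_oleinik. apply CV_min; apply CV_plus; try apply peierls_cv; apply Un_cv_const.
    apply (Un_cv_S v). apply var_cv0.
  - apply peierls_cv. Qed.

Lemma peierls_continuous : continuous_S peierls.
Proof. intros y eps He. destruct (tail_cv0 eps He) as [n Hn]. exists n. intros y' Ha.
  specialize (Hn n (le_n n)). unfold R_dist in Hn. rewrite Rminus_0_r in Hn.
  pose proof (tail_nonneg n). rewrite Rabs_right in Hn by lra. pose proof (peierls_var n y y' Ha). lra. Qed.

Lemma peierls_calibrated : calibrated H Hbar peierls.
Proof. split. apply peierls_continuous. intro y. split.
  - intros x' Hx'. rewrite (bcons_shift x'), Hx'. pose proof (peierls_sub (x' 0%nat) y). lra.
  - pose proof (peierls_cal y). pose proof (peierls_sub false y). pose proof (peierls_sub true y).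
    unfold lax_oleinik in H0.
    destruct (Rle_dec (peierls (bcons false y) + (H (bcons false y) - Hbar))
                      (peierls (bcons true y) + (H (bcons true y) - Hbar))).
    + exists (bcons false y). split; auto. rewrite Rmin_left in H0 by auto. lra.
    + exists (bcons true y). split; auto. rewrite Rmin_right in H0 by lra. lra. Qed.

End Peierls.

Lemma Mather_peierls_calibrated x : Mather H Hbar x ->
  exists V : Sigma -> R,
    (forall y, peierls_is H Hbar x y (V y)) /\ modulus V tail /\ calibrated H Hbar V.
Proof. intros Hx. exists (peierls x Hx). split; [|split].
  - apply peierls_is_peierls.
  - apply peierls_var.
  - apply peierls_calibrated. Qed.

Lemma var_unique v' l' :
  (forall n, var_is H n (v' n)) -> Un_cv (fun N => sum_f_R0 v' N) l' -> v' = v /\ l' = l.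
Proof. intros Hv' Hl'. assert (v' = v).
  { apply functional_extensionality; intro n. apply (is_lub_unique _ _ _ (Hv' n) (Hv n)). }
  subst. split; auto. apply (UL_sequence _ _ _ Hl' Hl). Qed.

Lemma in_K_of_modulus V : continuous_S V -> modulus V tail -> in_K H V.
Proof. intros Hc Hb. split; auto. intros v' l' Hv' Hl' n _ y y' Ha.
  destruct (var_unique v' l' Hv' Hl'); subst. apply Hb; auto. Qed.

(** * Calibrated sub-actions *)

Lemma peierls_is_ge x y r a (e : nat -> R) : Un_cv e 0 ->
  (forall n p s, S_is H Hbar n p x y s -> a - e p <= s) -> peierls_is H Hbar x y r -> a <= r.
Proof. intros He Hs [s [L [HS [HL Hr]]]].
  assert (HLp : forall p, a - e p <= L p)
    by (intro p; apply (cv_ge_const_ev _ _ _ 0 (fun n _ => Hs n p _ (HS n p)) (HL p))).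
  replace a with (a - 0) by ring.
  apply (Rle_cv_lim_ev (fun p => a - e p) L _ _ 0); auto. apply CV_minus; auto. apply Un_cv_const. Qed.

Lemma peierls_is_le x y r a (e : nat -> R) : Un_cv e 0 ->
  (forall n p s, S_is H Hbar n p x y s -> s <= a + e p) -> peierls_is H Hbar x y r -> r <= a.
Proof. intros He Hs [s [L [HS [HL Hr]]]].
  assert (HLp : forall p, L p <= a + e p)
    by (intro p; apply (cv_le_const_ev _ _ _ 0 (fun n _ => Hs n p _ (HS n p)) (HL p))).
  replace a with (a + 0) by ring.
  apply (Rle_cv_lim_ev L (fun p => a + e p) _ _ 0); auto. apply CV_plus; auto. apply Un_cv_const. Qed.

Lemma H_bound z : Rabs (H z) <= Rabs (H (ext [])) + v 0.
Proof. pose proof (var_bound 0%nat z (ext []) (agree_0 _ _)).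
  pose proof (Rabs_triang (H z - H (ext [])) (H (ext []))).
  replace (H z - H (ext []) + H (ext [])) with (H z) in H1 by ring. lra. Qed.

Section Calibrated.
Variable V : Sigma -> R.
Hypothesis HV : calibrated H Hbar V.

Lemma calibrated_sub x : V (shift x) + Hbar <= V x + H x.
Proof. destruct HV as [_ Hc]. apply (proj1 (Hc (shift x))). auto. Qed.

Lemma calibrated_birkhoff z k : V (shiftn k z) <= V z + B z k.
Proof. induction k. simpl. change (shiftn 0 z) with z. lra.
  pose proof (calibrated_sub (shiftn k z)). rewrite shift_shiftn in H0. simpl. lra. Qed.

(* Pair a calibrated preimage x of y with the preimage x' of y' having the same
   first symbol: then V y' - V y <= V x' - V x + var(H, n + 1), and x, x' agree on
   n + 1 symbols. After m such steps the agreement reaches depth q, where the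
   modulus [eps] of V takes over. *)
Lemma calibrated_var_approx eps q (Hq : forall x y, agree q x y -> Rabs (V x - V y) < eps) :
  forall m n y y', (q <= n + m)%nat -> agree n y y' ->
  V y' - V y <= sumN m (fun i => v (n + 1 + i)%nat) + eps.
Proof. induction m; intros n y y' Hqn Ha.
  - simpl. assert (agree q y y') by (apply agree_mono with n; auto; lia). specialize (Hq _ _ H0).
    apply Rabs_lt_inv in Hq. lra.
  - destruct HV as [_ Hc]. destruct (proj2 (Hc y)) as [x [Hxs Hxe]].
    set (a := x 0%nat). set (x' := bcons a y').
    assert (Hx : x = bcons a y) by (rewrite (bcons_shift x), Hxs; auto).
    pose proof (calibrated_sub x') as E1. replace (shift x') with y' in E1 by reflexivity.
    assert (Hag : agree (S n) x x') by (rewrite Hx; apply agree_bcons; auto).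
    pose proof (IHm (S n) x x' ltac:(lia) Hag) as E2.
    pose proof (var_bound _ _ _ Hag) as E3. apply Rabs_le_inv in E3.
    rewrite sumN_front. replace (n + 1 + 0)%nat with (S n) by lia.
    rewrite (sumN_ext m (fun i => v (n + 1 + S i)%nat) (fun i => v (S n + 1 + i)%nat))
      by (intros; f_equal; lia).
    lra. Qed.

Lemma calibrated_var : modulus V tail.
Proof. intros n y y' Ha. destruct HV as [Hcont _].
  assert (Hone : forall a b, agree n a b -> V b - V a <= tail n).
  { intros a b Hab. apply Rle_plus_epsilon. intros eps He.
    destruct (continuous_S_uniform V Hcont eps He) as [q Hq].
    pose proof (calibrated_var_approx eps q Hq q n a b ltac:(lia) Hab). pose proof (sum_var_le_tail n q).
    lra. }
  apply Rabs_le. pose proof (Hone _ _ Ha). pose proof (Hone _ _ (agree_sym _ _ _ Ha)). lra. Qed.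

Lemma calibrated_le_peierls x y r : peierls_is H Hbar x y r -> V y <= V x + r.
Proof. intros Hr. cut (V y - V x <= r); [lra|].
  apply (peierls_is_ge x y r _ (fun p => 2 * tail p)); auto.
  - replace 0 with (2 * 0) by ring. apply (CV_mult (fun _ => 2)); [apply Un_cv_const | apply tail_cv0].
  - intros n p s Hs. apply (is_inf_ge _ _ _ Hs). intros r' [k [z [Hk [H1 [H2 ->]]]]].
    pose proof (calibrated_birkhoff z k). pose proof (calibrated_var _ _ _ H1) as E1.
    pose proof (calibrated_var _ _ _ H2) as E2. apply Rabs_le_inv in E1. apply Rabs_le_inv in E2. lra. Qed.

Definition calibrated_pre (y : Sigma) : {x | shift x = y /\ V x + H x = V y + Hbar} :=
  constructive_indefinite_description _ (proj2 (proj2 HV y)).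

Fixpoint past (y : Sigma) (i : nat) : Sigma :=
  match i with O => y | S j => proj1_sig (calibrated_pre (past y j)) end.

Lemma shift_past y i : shift (past y (S i)) = past y i.
Proof. simpl. exact (proj1 (proj2_sig (calibrated_pre (past y i)))). Qed.

Lemma past_calibrated y i : V (past y (S i)) + H (past y (S i)) = V (past y i) + Hbar.
Proof. simpl. exact (proj2 (proj2_sig (calibrated_pre (past y i)))). Qed.

Lemma shiftn_past y k : shiftn k (past y k) = y.
Proof. induction k. reflexivity. rewrite shiftn_S, shift_past; auto. Qed.

Lemma birkhoff_past y k : B (past y k) k = V y - V (past y k).
Proof. induction k. simpl; ring. rewrite birkhoff_front, shift_past, IHk.
  pose proof (past_calibrated y k). lra. Qed.

Definition past_empirical (y : Sigma) (k : nat) := empirical k (fun i => past y (S i)).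

Lemma past_empirical_defect y k w : (1 <= k)%nat ->
  Rabs (past_empirical y k w - (past_empirical y k (false :: w) + past_empirical y k (true :: w))) <= / INR k.
Proof. intros Hk. unfold past_empirical, empirical.
  rewrite <- Rmult_plus_distr_l, <- sumN_plus, <- Rmult_minus_distr_l.
  rewrite (sumN_ext _ (fun i => cyl_ind (past y (S i)) (false :: w) + cyl_ind (past y (S i)) (true :: w))
                      (fun i => cyl_ind (past y i) w)).
  2:{ intros. rewrite cyl_ind_cons_sum, shift_past; auto. }
  rewrite (sumN_shift k (fun i => cyl_ind (past y i) w)).
  assert (0 < / INR k) by (apply Rinv_0_lt_compat, lt_0_INR; lia).
  rewrite Rabs_mult, (Rabs_right (/ INR k)) by lra.
  pose proof (cyl_ind_01 (past y 0) w). pose proof (cyl_ind_01 (past y k) w).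
  apply Rle_trans with (/ INR k * 1); [apply Rmult_le_compat_l; [lra|apply Rabs_le; lra] | lra]. Qed.

Lemma past_average y k : (1 <= k)%nat ->
  / INR k * sumN k (fun i => H (past y (S i))) = Hbar + / INR k * (V y - V (past y k)).
Proof. intros Hk. rewrite (sumN_ext _ _ (fun i => (V (past y i) - V (past y (S i))) + Hbar)).
  2:{ intros. pose proof (past_calibrated y i). lra. }
  rewrite sumN_plus, sumN_minus, (sumN_shift k (fun i => V (past y i))), sumN_const. change (past y 0) with y.
  field. apply not_0_INR; lia. Qed.

Lemma past_average_close y k : (1 <= k)%nat ->
  Rabs (/ INR k * sumN k (fun i => H (past y (S i))) - Hbar) <= / INR k * tail 0.
Proof. intros Hk. rewrite past_average by auto.
  replace (Hbar + / INR k * (V y - V (past y k)) - Hbar) with (/ INR k * (V y - V (past y k))) by ring.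
  assert (0 < / INR k) by (apply Rinv_0_lt_compat, lt_0_INR; lia).
  rewrite Rabs_mult, Rabs_right by lra. apply Rmult_le_compat_l; [lra|].
  apply (calibrated_var 0%nat), agree_0. Qed.

Section PastCluster.
Variables (y : Sigma) (mu : list bool -> R).
Hypothesis Hmu : cluster_of (past_empirical y) mu.

Lemma past_cluster_inv_prob : inv_prob mu.
Proof. split.
  - apply (cluster_of_prob (past_empirical y)); auto. intros k Hk. apply empirical_prob; auto.
  - apply (cluster_of_invariant (past_empirical y)); auto. intros; apply past_empirical_defect; auto. Qed.

(* Up to errors that vanish as n -> oo and k -> oo, the n-th Riemann sum of H
   against mu is that against [past_empirical y k], which is within v n of the
   Birkhoff average along the backward orbit, itself within tail 0 / k of Hbar. *)
Lemma past_cluster_integral : integral_is mu H Hbar.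
Proof.
  destruct (integral_exists mu (proj1 past_cluster_inv_prob) H v var_bound var_cv0) as [I [HI HIb]].
  replace Hbar with I; auto.
  set (M := Rabs (H (ext [])) + v 0).
  assert (HM : 0 <= M) by (unfold M; pose proof (Rabs_pos (H (ext []))); pose proof (var_nonneg 0); lra).
  apply eq_of_Rabs_lt_all. intros eps He.
  destruct (var_cv0 (eps / 4)) as [n Hn]; [lra|]. specialize (Hn n (le_n n)). unfold R_dist in Hn.
  rewrite Rminus_0_r, Rabs_right in Hn by (apply Rle_ge, var_nonneg).
  assert (Hp2 : 0 < 2 ^ n) by (apply pow_lt; lra).
  set (d := eps / 4 / (2 ^ n * (M + 1))).
  assert (Hd : 0 < d) by (unfold d; apply Rdiv_lt_0_compat; [lra|]; apply Rmult_lt_0_compat; lra).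
  destruct (inv_INR_small (eps / (4 * (tail 0 + 1)))) as [N [HN1 HN]].
  { apply Rdiv_lt_0_compat; [lra|]. pose proof (tail_nonneg 0); lra. }
  destruct (Hmu n d N Hd) as [k [Hk Hkw]]. specialize (HN k Hk).
  assert (Hk1 : (1 <= k)%nat) by lia.
  pose proof (HIb n) as E1.
  assert (E2 : Rabs (riemann_sum mu H n - riemann_sum (past_empirical y k) H n) <= eps / 4).
  { eapply Rle_trans.
    - apply (riemann_sum_close _ _ _ _ d M); [|apply H_bound].
      intros w Hw. rewrite Rabs_minus_sym. left. apply Hkw. lia.
    - unfold d. apply Rle_trans with (eps / 4 * (M / (M + 1))); [right; field; lra|].
      assert (M / (M + 1) <= 1).
      { apply Rmult_le_reg_r with (M + 1); [lra|]. unfold Rdiv. rewrite Rmult_assoc, Rinv_l by lra. lra. }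
      nra. }
  pose proof (riemann_sum_empirical_close k (fun i => past y (S i)) H v n Hk1 var_bound) as E3.
  fold (past_empirical y k) in E3.
  pose proof (past_average_close y k Hk1) as E4.
  assert (E5 : / INR k * tail 0 <= eps / 4).
  { pose proof (tail_nonneg 0). assert (0 < / INR k) by (apply Rinv_0_lt_compat, lt_0_INR; lia).
    apply Rle_trans with (eps / (4 * (tail 0 + 1)) * (tail 0 + 1)); [nra | right; field; lra]. }
  apply Rabs_le_inv in E1. apply Rabs_le_inv in E2. apply Rabs_le_inv in E3. apply Rabs_le_inv in E4.
  apply Rabs_def1; lra.
Qed.

Lemma past_cluster_minimizing : minimizing H Hbar mu.
Proof. split; [apply past_cluster_inv_prob | apply past_cluster_integral]. Qed.

Lemma past_cluster_peierls_le x r : in_support mu x -> peierls_is H Hbar x y r -> r <= V y - V x.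
Proof. intros Hx Hr. apply (peierls_is_le x y r _ tail tail_cv0); auto.
  intros n p s Hs.
  destruct (cluster_empirical_visits (fun i => past y (S i)) mu x Hmu Hx n p) as [i [Hi Ha]].
  apply Rle_trans with (B (past y (S i)) (S i)).
  - apply (is_inf_le _ _ _ Hs). exists (S i), (past y (S i)). repeat split; auto.
    rewrite shiftn_past. apply agree_refl.
  - rewrite birkhoff_past. pose proof (calibrated_var _ _ _ Ha) as E. apply Rabs_le_inv in E. lra. Qed.

End PastCluster.

Lemma calibrated_attained y : exists x r, Mather H Hbar x /\ peierls_is H Hbar x y r /\ V y = V x + r.
Proof.
  destruct (cylinder_cluster (past_empirical y)) as [mu Hmu].
  { intros k w. split; [apply empirical_nonneg | apply empirical_le1]. }
  destruct (support_nonempty mu (proj1 (past_cluster_inv_prob y mu Hmu))) as [x Hx].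
  assert (HM : Mather H Hbar x) by (exists mu; split; auto; apply past_cluster_minimizing with y; auto).
  destruct (Mather_peierls_calibrated x HM) as [h [Hh _]].
  exists x, (h y). repeat split; auto.
  pose proof (calibrated_le_peierls x y (h y) (Hh y)).
  pose proof (past_cluster_peierls_le y mu Hmu x (h y) Hx (Hh y)). lra.
Qed.

End Calibrated.

Lemma Mather_peierls_in_K x : Mather H Hbar x ->
  exists V : Sigma -> R,
    (forall y, peierls_is H Hbar x y (V y)) /\ in_K H V /\ calibrated H Hbar V.
Proof. intros Hx. destruct (Mather_peierls_calibrated x Hx) as [V [Hpei [Hmod Hcal]]].
  exists V. split; [|split]; auto. apply in_K_of_modulus; [apply Hcal | auto]. Qed.

Lemma calibrated_in_K_peierls V : calibrated H Hbar V ->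
  in_K H V /\
  forall y,
    (forall x, Mather H Hbar x -> exists r, peierls_is H Hbar x y r /\ V y <= V x + r) /\
    (exists x r, Mather H Hbar x /\ peierls_is H Hbar x y r /\ V y = V x + r).
Proof. intros HV. split; [apply in_K_of_modulus; [apply HV | apply calibrated_var; auto]|].
  intro y. split; [|apply calibrated_attained; auto].
  intros x Hx. destruct (Mather_peierls_calibrated x Hx) as [h [Hh _]].
  exists (h y). split; auto. apply (calibrated_le_peierls V HV x y (h y) (Hh y)). Qed.

End Main.

Theorem proposition2p5 (H : Sigma -> R) (Hbar : R)
  (Hcont : continuous_S H) (Hsum : summable_variation H)
  (HHbar : Hbar_is H Hbar) :
  (forall x, Mather H Hbar x ->
     exists V : Sigma -> R,
       (forall y, peierls_is H Hbar x y (V y)) /\ in_K H V /\ calibrated H Hbar V) /\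
  (forall V : Sigma -> R, calibrated H Hbar V ->
     in_K H V /\
     forall y,
       (forall x, Mather H Hbar x ->
          exists r, peierls_is H Hbar x y r /\ V y <= V x + r) /\
       (exists x r, Mather H Hbar x /\ peierls_is H Hbar x y r /\ V y = V x + r)).
Proof.
  destruct Hsum as [v [l [Hv Hl]]]. split.
  - exact (Mather_peierls_in_K H Hbar v l Hv Hl HHbar).
  - exact (calibrated_in_K_peierls H Hbar v l Hv Hl HHbar).
Qed.
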